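(* Let $P_{XY}$ be a probability measure on $\mathbb{R}^2$ with marginals $P_X,P_Y$, let $P_Z$ be a probability measure on $\mathbb{R}$, and for each $n$ let $Z^n=(Z_1,\dots,Z_n)$ be i.i.d. $P_Z$. If $D(P_{XY}\|P_ZP_Y)<\infty$, then for each $\delta>0$ there exists $\epsilon(\delta)>0$ such that for every $0<\epsilon<\epsilon(\delta)$ and every sequence $(y^{(n)})_{n\ge1}$ with $y^{(n)}\in A_\epsilon^n(P_Y)$ for all $n$, $$\limsup_{n\to\infty}\frac1n\log P_Z^n\big((Z^n,y^{(n)})\in A_\epsilon^n(P_{XY})\big)\le -D(P_{XY}\|P_ZP_Y)+\delta.$$
   Context: Prokhorov distance on probability measures on $\mathbb{R}^d$: $\pi_d(P_1,P_2)=\inf\{\epsilon>0: P_1(A)<P_2(A^\epsilon)+\epsilon\text{ and }P_2(A)<P_1(A^\epsilon)+\epsilon\ \forall\text{ Borel }A\}$, where $A^\epsilon=\{x:\exists y\in A,\|x-y\|<\epsilon\}$. For $x\in\mathbb{R}^n$ the empirical measure is $\bar P_x(A)=\frac1n\sum_i\mathbb{1}\{x_i\in A\}$, and for a pair $(x,y)$, $\bar P_{xy}(A\times B)=\frac1n\sum_i\mathbb{1}\{x_i\in A,y_i\in B\}$. $A_\epsilon^n(P_Y)=\{y\in\mathbb{R}^n:\pi_1(\bar P_y,P_Y)<\epsilon\}$ and $A_\epsilon^n(P_{XY})=\{(x,y):\pi_2(\bar P_{xy},P_{XY})<\epsilon\}$ (weak* typicality). The divergence between general measures is $D(P\|Q)=\sup_{\mathcal{Q}}D(P_{\mathcal{Q}}\|Q_{\mathcal{Q}})$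 over finite measurable partitions $\mathcal{Q}$; $P_ZP_Y$ denotes the product measure. *)

From Stdlib Require Import Reals Lra Classical ClassicalEpsilon.
Open Scope R_scope.

Definition set (T : Type) := T -> Prop.

Definition is_sigma_algebra {T : Type} (F : set T -> Prop) : Prop :=
  F (fun _ => True) /\
  (forall A, F A -> F (fun x => ~ A x)) /\
  (forall A : nat -> set T, (forall k, F (A k)) -> F (fun x => exists k, A k x)).

Definition metric_open {T : Type} (d : T -> T -> R) (U : set T) : Prop :=
  forall x, U x -> exists r, 0 < r /\ forall y, d x y < r -> U y.

Definition borel {T : Type} (d : T -> T -> R) (A : set T) : Prop :=
  forall F : set T -> Prop, is_sigma_algebra F ->
    (forall U, metric_open d U -> F U) -> F A.

Definition dist1 (x y : R) : R := Rabs (x - y).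
Definition dist2 (p q : R * R) : R :=
  sqrt ((fst p - fst q) ^ 2 + (snd p - snd q) ^ 2).

Definition borel1 := @borel R dist1.
Definition borel2 := @borel (R * R) dist2.

Definition is_probability {T : Type} (M : set T -> Prop) (mu : set T -> R) : Prop :=
  (forall A, M A -> 0 <= mu A) /\
  mu (fun _ => True) = 1 /\
  (forall A : nat -> set T, (forall k, M (A k)) ->
     (forall i j x, i <> j -> A i x -> A j x -> False) ->
     Un_cv (fun N => sum_f_R0 (fun k => mu (A k)) N) (mu (fun x => exists k, A k x))).

Fixpoint rsum (f : nat -> R) (n : nat) : R :=
  match n with O => 0 | S k => rsum f k + f k end.
Fixpoint rprod (f : nat -> R) (n : nat) : R :=
  match n with O => 1 | S k => rprod f k * f k end.

Definition ind {T : Type} (A : set T) (x : T) : R :=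
  if excluded_middle_informative (A x) then 1 else 0.

Definition empirical {T : Type} (n : nat) (pts : nat -> T) (A : set T) : R :=
  / INR n * rsum (fun i => ind A (pts i)) n.

Definition enlarge {T : Type} (d : T -> T -> R) (A : set T) (eps : R) : set T :=
  fun x => exists y, A y /\ d x y < eps.

Definition prokhorov_ok {T : Type} (d : T -> T -> R) (P1 P2 : set T -> R) (eps : R) : Prop :=
  0 < eps /\
  forall A, borel d A ->
    P1 A < P2 (enlarge d A eps) + eps /\ P2 A < P1 (enlarge d A eps) + eps.

Definition is_glb (S : R -> Prop) (m : R) : Prop :=
  (forall x, S x -> m <= x) /\ (forall m', (forall x, S x -> m' <= x) -> m' <= m).

(** pi_d(P1,P2) < eps, where pi_d is the infimum of admissible eps. *)
Definition prokhorov_lt {T : Type} (d : T -> T -> R) (P1 P2 : set T -> R) (eps : R) : Prop :=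
  exists m, is_glb (prokhorov_ok d P1 P2) m /\ m < eps.

Definition typical_Y (PY : set R -> R) (eps : R) (n : nat) (y : nat -> R) : Prop :=
  prokhorov_lt dist1 (empirical n y) PY eps.
Definition typical_XY (PXY : set (R * R) -> R) (eps : R) (n : nat)
  (x y : nat -> R) : Prop :=
  prokhorov_lt dist2 (empirical n (fun i => (x i, y i))) PXY eps.

Definition is_partition {T : Type} (M : set T -> Prop) (parts : list (set T)) : Prop :=
  (forall A, List.In A parts -> M A) /\
  (forall x, exists i, (i < length parts)%nat /\ List.nth i parts (fun _ => False) x) /\
  (forall i j x, (i < length parts)%nat -> (j < length parts)%nat -> i <> j ->
     List.nth i parts (fun _ => False) x -> List.nth j parts (fun _ => False) x -> False).

(** p log (p/q), with 0 log(0/q) = 0 (used only when q > 0 or p = 0) *)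
Definition div_term (p q : R) : R := if Req_EM_T p 0 then 0 else p * ln (p / q).

Definition partition_div {T : Type} (P Q : set T -> R) (parts : list (set T)) : R :=
  List.fold_right (fun A s => div_term (P A) (Q A) + s) 0 parts.

(** [divergence_is M P Q D] : D(P||Q) is finite and equals D.
    Finiteness includes: no partition cell has P(A) > 0 = Q(A)
    (such a cell would contribute +infinity). *)
Definition divergence_is {T : Type} (M : set T -> Prop) (P Q : set T -> R) (D : R) : Prop :=
  (forall parts, is_partition M parts ->
     forall A, List.In A parts -> 0 < P A -> 0 < Q A) /\
  is_lub (fun s => exists parts, is_partition M parts /\ s = partition_div P Q parts) D.

(** limsup_n (1/n) log p_n <= L, with log 0 = -infinity. *)
Definition log_rate_limsup_le (p : nat -> R) (L : R) : Prop :=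
  forall eta, 0 < eta -> exists N, forall n, (N <= n)%nat -> (1 <= n)%nat ->
    p n = 0 \/ ln (p n) / INR n <= L + eta.

From Stdlib Require Import Reals Classical ClassicalEpsilon.
From Stdlib Require Import Lra Lia FunctionalExtensionality PropExtensionality Rgeom ZArith List.
(* Imported last so that [Defs.ind] shadows [Rtopology.ind]. *)
From Pilot Require Import Defs.
Open Scope R_scope.

(** Let [C_1, ..., C_K] be a finite Borel partition of R^2 with
  [sum_k p_k ln (p_k / r_k) > D - delta/4], where [p = P_XY] and [r = P_Z P_Y],
  and tilt by [lambda_k = ln (p_k / r_k)]: then [sum_k lambda_k p_k > D - delta/4]
  while [sum_k e^(lambda_k) r_k <= 1 + delta/8].  The proof transports this
  tilt to a fine rectangular grid and applies a Chernoff bound: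

  - every Borel set is approximated, simultaneously for two probability
    measures, by unions of cells of any fine enough grid covering a large
    square ([approximable_borel]); hence the cells of such a grid can be
    labelled by partition indices, with a small mislabelled set;
  - shifting the grid by a suitable offset makes the thin strips around its
    lines [P_XY]-negligible ([offset_thin_strip]); then, for small [eps],
    Prokhorov closeness of the empirical measure to [P_XY] forces every cell
    frequency to be close to its [P_XY]-probability ([cell_frequency_close]);
  - the cell indices of i.i.d. samples have product probabilities
    ([cylinder_prob]), which gives a Chernoff bound ([chernoff_exp]) for the
    tilted sum [sum_i lambda(cell(Z_i, y_i))]; on the typical event this sum
    is at least about [n sum_k lambda_k p_k], while the Chernoff exponent is
    at most about [n (sum_k e^(lambda_k) r_k - 1)] ([tilted_event_bound];
    this is where [P_Z P_Y] being a product enters, [mgf_cells_product]).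

  Hence [ln P(typical) / n <= -(D - delta/4) + delta/8 + errors], and the
  theorem [mainTheorem6] assembles these estimates with explicit error
  budgets ([error_budget]). *)

Lemma set_ext {T : Type} (A B : set T) : (forall x, A x <-> B x) -> A = B.
Proof.
  intros H; apply functional_extensionality; intros x.
  apply propositional_extensionality; auto.
Qed.

Lemma measure_ext {T : Type} (mu : set T -> R) A B : (forall x, A x <-> B x) -> mu A = mu B.
Proof. intros H; rewrite (set_ext A B H); auto. Qed.

(** Stdlib's [sum_f_R0 f N] sums [N + 1] terms. *)
Lemma sum_f_rsum f N : sum_f_R0 f N = rsum f (S N).
Proof. induction N; simpl in *. lra. rewrite IHN; simpl; lra. Qed.

Lemma rsum_ext f g n : (forall k, (k < n)%nat -> f k = g k) -> rsum f n = rsum g n.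
Proof. induction n; intros H; simpl; auto. rewrite IHn, H; auto; intros; apply H; lia. Qed.

Lemma rsum_le f g n : (forall k, (k < n)%nat -> f k <= g k) -> rsum f n <= rsum g n.
Proof.
  induction n; intros H; simpl. lra.
  assert (f n <= g n) by (apply H; lia).
  assert (rsum f n <= rsum g n) by (apply IHn; intros; apply H; lia). lra.
Qed.

Lemma rsum_lt f g n : (1 <= n)%nat -> (forall k, (k < n)%nat -> f k < g k) -> rsum f n < rsum g n.
Proof.
  induction n; intros Hn H. lia. simpl. destruct n.
  - simpl. assert (f 0%nat < g 0%nat) by (apply H; lia). lra.
  - assert (rsum f (S n) < rsum g (S n)) by (apply IHn; [lia|intros; apply H; lia]).
    assert (f (S n) < g (S n)) by (apply H; lia). lra.
Qed.

Lemma rsum_plus f g n : rsum (fun k => f k + g k) n = rsum f n + rsum g n.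
Proof. induction n; simpl; lra. Qed.

Lemma rsum_scal c f n : rsum (fun k => c * f k) n = c * rsum f n.
Proof. induction n; simpl; try rewrite IHn; lra. Qed.

Lemma rsum_minus f g n : rsum (fun k => f k - g k) n = rsum f n - rsum g n.
Proof. induction n; simpl; lra. Qed.

Lemma rsum_const c n : rsum (fun _ => c) n = INR n * c.
Proof. induction n; simpl rsum; [simpl; lra|]. rewrite IHn, S_INR; lra. Qed.

Lemma rsum_nonneg f n : (forall k, (k < n)%nat -> 0 <= f k) -> 0 <= rsum f n.
Proof.
  intros H. replace 0 with (rsum (fun _ => 0) n) by (rewrite rsum_const; lra).
  apply rsum_le; auto.
Qed.

Lemma rsum_term f n k : (forall i, (i < n)%nat -> 0 <= f i) -> (k < n)%nat -> f k <= rsum f n.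
Proof.
  induction n; intros H Hk. lia. simpl. destruct (Nat.eq_dec k n).
  - subst. assert (0 <= rsum f n) by (apply rsum_nonneg; intros; apply H; lia). lra.
  - assert (0 <= f n) by (apply H; lia).
    assert (f k <= rsum f n) by (apply IHn; auto; lia). lra.
Qed.

Lemma rsum_shift f n : rsum f (S n) = f O + rsum (fun k => f (S k)) n.
Proof.
  induction n. simpl; ring.
  change (rsum f (S (S n))) with (rsum f (S n) + f (S n)). rewrite IHn. simpl. ring.
Qed.

Lemma rsum_swap (f : nat -> nat -> R) n m :
  rsum (fun i => rsum (fun j => f i j) m) n = rsum (fun j => rsum (fun i => f i j) n) m.
Proof.
  induction n; simpl. rewrite rsum_const; simpl; lra.
  rewrite IHn, <- rsum_plus; reflexivity.
Qed.

Lemma rsum_abs f n : Rabs (rsum f n) <= rsum (fun k => Rabs (f k)) n.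
Proof. induction n; simpl. rewrite Rabs_R0; lra. eapply Rle_trans. apply Rabs_triang. lra. Qed.

Lemma rsum_single f n k0 : (k0 < n)%nat -> (forall k, (k < n)%nat -> k <> k0 -> f k = 0) ->
  rsum f n = f k0.
Proof.
  induction n; intros Hk H. lia. simpl. destruct (Nat.eq_dec k0 n).
  - subst. rewrite (rsum_ext f (fun _ => 0)) by (intros; apply H; lia). rewrite rsum_const; lra.
  - assert (Hn : f n = 0) by (apply H; lia). rewrite Hn, IHn; [lra|lia|intros; apply H; lia].
Qed.

Lemma abs_le_bounds x a : Rabs x <= a -> - a <= x <= a.
Proof. unfold Rabs; destruct Rcase_abs; intros; lra. Qed.

Lemma exp_le_of_abs x L : Rabs x <= L -> exp x <= exp L.
Proof.
  intros H. apply abs_le_bounds in H.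
  destruct (Req_dec x L) as [->|]; [lra|]. apply Rlt_le, exp_increasing; lra.
Qed.

Lemma ln_le_of_le_exp p x : 0 < p -> p <= exp x -> ln p <= x.
Proof.
  intros Hp H. rewrite <- (ln_exp x). destruct (Rle_lt_or_eq_dec _ _ H) as [Hl|He].
  - apply Rlt_le, ln_increasing; auto.
  - rewrite He; lra.
Qed.

Lemma shares_below (K : nat) eta : 0 < eta -> INR K * (eta / (INR K + 1)) < eta.
Proof.
  intros He. assert (HK := pos_INR K).
  replace (INR K * (eta / (INR K + 1))) with (eta - eta / (INR K + 1)) by (field; lra).
  assert (0 < eta / (INR K + 1)) by (apply Rdiv_lt_0_compat; lra). lra.
Qed.

Lemma rprod_ext f g n : (forall k, (k < n)%nat -> f k = g k) -> rprod f n = rprod g n.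
Proof. induction n; intros H; simpl; auto. rewrite IHn, H; auto; intros; apply H; lia. Qed.

Lemma rprod_nonneg f n : (forall k, (k < n)%nat -> 0 <= f k) -> 0 <= rprod f n.
Proof.
  induction n; intros H; simpl. lra.
  apply Rmult_le_pos. apply IHn; intros; apply H; lia. apply H; lia.
Qed.

Lemma rprod_le f g n : (forall k, (k < n)%nat -> 0 <= f k <= g k) -> rprod f n <= rprod g n.
Proof.
  induction n; intros H; simpl. lra.
  assert (0 <= f n <= g n) by (apply H; lia).
  assert (0 <= rprod f n) by (apply rprod_nonneg; intros; apply H; lia).
  assert (rprod f n <= rprod g n) by (apply IHn; intros; apply H; lia). nra.
Qed.

Lemma rprod_mult f g n : rprod (fun i => f i * g i) n = rprod f n * rprod g n.
Proof. induction n; simpl. ring. rewrite IHn. ring. Qed.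

Lemma rprod_exp f n : rprod (fun i => exp (f i)) n = exp (rsum f n).
Proof. induction n; simpl. rewrite exp_0; auto. rewrite IHn, exp_plus; auto. Qed.

Lemma nat_above (x : R) : exists N : nat, x < INR N.
Proof. destruct (INR_archimed 1 x) as [N HN]; [lra|]. exists N; lra. Qed.

(** ** Sigma-algebras and probability measures *)

Section SigmaAlgebra.
Context {T : Type} (M : set T -> Prop) (HM : is_sigma_algebra M).

Lemma sa_T : M (fun _ => True). Proof using HM. apply HM. Qed.
Lemma sa_compl A : M A -> M (fun x => ~ A x). Proof using HM. apply HM. Qed.
Lemma sa_cup (A : nat -> set T) : (forall k, M (A k)) -> M (fun x => exists k, A k x).
Proof using HM. apply HM. Qed.
Lemma sa_ext A B : (forall x, A x <-> B x) -> M A -> M B.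
Proof using HM. intros H; rewrite (set_ext A B H); auto. Qed.
Lemma sa_empty : M (fun _ => False).
Proof using HM. apply (sa_ext (fun x => ~ True)). tauto. apply sa_compl, sa_T. Qed.
Lemma sa_const (P : Prop) : M (fun _ => P).
Proof using HM.
  destruct (classic P).
  - apply (sa_ext (fun _ => True)). tauto. apply sa_T.
  - apply (sa_ext (fun _ => False)). tauto. apply sa_empty.
Qed.
Lemma sa_union A B : M A -> M B -> M (fun x => A x \/ B x).
Proof using HM.
  intros HA HB. apply (sa_ext (fun x => exists k, (if Nat.eq_dec k 0 then A else B) x)).
  - intros x; split.
    + intros [k Hk]; destruct (Nat.eq_dec k 0); auto.
    + intros [H|H]. exists 0%nat; auto. exists 1%nat; auto.
  - apply sa_cup; intros k; destruct (Nat.eq_dec k 0); auto.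
Qed.
Lemma sa_inter A B : M A -> M B -> M (fun x => A x /\ B x).
Proof using HM.
  intros HA HB. apply (sa_ext (fun x => ~ (~ A x \/ ~ B x))). intros x; tauto.
  apply sa_compl, sa_union; apply sa_compl; auto.
Qed.
Lemma sa_diff A B : M A -> M B -> M (fun x => A x /\ ~ B x).
Proof using HM. intros; apply sa_inter; auto; apply sa_compl; auto. Qed.
Lemma sa_capc (A : nat -> set T) : (forall k, M (A k)) -> M (fun x => forall k, A k x).
Proof using HM.
  intros H. apply (sa_ext (fun x => ~ exists k, ~ A k x)).
  - intros x; split. intros H1 k; apply NNPP; intros H2; apply H1; eauto. intros H1 [k Hk]; auto.
  - apply sa_compl, sa_cup; intros k; apply sa_compl; auto.
Qed.
(** Padding a family [A 0, ..., A (n-1)] of measurable sets with a constant set. *)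
Lemma sa_bounded_index (A : nat -> set T) n (P : Prop) : (forall k, (k < n)%nat -> M (A k)) ->
  (forall k, ~ (k < n)%nat -> M (fun _ => P)) ->
  forall k, M (fun x => (k < n)%nat /\ A k x \/ ~ (k < n)%nat /\ P).
Proof using HM.
  intros HA HP k. destruct (Compare_dec.lt_dec k n) as [Hk|Hk].
  - apply (sa_ext (A k)); [intros; tauto | exact (HA k Hk)].
  - apply (sa_ext (fun _ => P)); [intros; tauto | exact (HP k Hk)].
Qed.
Lemma sa_fincup (A : nat -> set T) n : (forall k, (k < n)%nat -> M (A k)) ->
  M (fun x => exists k, (k < n)%nat /\ A k x).
Proof using HM.
  intros H. apply (sa_ext (fun x => exists k, (k < n)%nat /\ A k x \/ ~ (k < n)%nat /\ False)).
  - intros x; split; intros [k Hk]; exists k; tauto.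
  - apply sa_cup, sa_bounded_index; auto. intros; apply sa_empty.
Qed.
Lemma sa_fincap (A : nat -> set T) n : (forall k, (k < n)%nat -> M (A k)) ->
  M (fun x => forall k, (k < n)%nat -> A k x).
Proof using HM.
  intros H. apply (sa_ext (fun x => forall k, (k < n)%nat /\ A k x \/ ~ (k < n)%nat /\ True)).
  - intros x; split; intros Hx k; specialize (Hx k); [|destruct (Compare_dec.lt_dec k n)]; tauto.
  - apply sa_capc, sa_bounded_index; auto. intros; apply sa_T.
Qed.
End SigmaAlgebra.
Arguments sa_T {T M} HM.
Arguments sa_compl {T M} HM.
Arguments sa_cup {T M} HM.
Arguments sa_ext {T M} HM.
Arguments sa_empty {T M} HM.
Arguments sa_const {T M} HM.
Arguments sa_union {T M} HM.
Arguments sa_inter {T M} HM.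
Arguments sa_diff {T M} HM.
Arguments sa_fincup {T M} HM.
Arguments sa_fincap {T M} HM.

Section Probability.
Context {T : Type} (M : set T -> Prop) (HM : is_sigma_algebra M) (mu : set T -> R)
  (Hmu : is_probability M mu).

Lemma prob_nonneg A : M A -> 0 <= mu A. Proof using Hmu. apply Hmu. Qed.
Lemma prob_T : mu (fun _ => True) = 1. Proof using Hmu. apply Hmu. Qed.

(** The empty set is a countable union of empty sets, so the partial sums
    [(N + 1) mu(empty)] converge; consecutive ones differ by [mu(empty)]. *)
Lemma prob_empty : mu (fun _ => False) = 0.
Proof using HM Hmu.
  destruct Hmu as [_ [_ H]]. specialize (H (fun _ _ => False)).
  set (c := mu (fun _ => False)) in *.
  assert (Hc : Un_cv (fun N => sum_f_R0 (fun _ => c) N) c).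
  { rewrite (measure_ext mu _ (fun _ => False)) in H by (intros; split; [intros [_ []]|tauto]).
    apply H. intros; apply sa_empty; auto. intros; tauto. }
  destruct (Req_dec c 0) as [|Hne]; auto. exfalso.
  assert (Hp : 0 < Rabs c) by (apply Rabs_pos_lt; auto).
  destruct (Hc (Rabs c / 2)) as [N HN]. lra.
  assert (A1 := HN (S N) ltac:(lia)). assert (A2 := HN N ltac:(lia)).
  simpl in A1. unfold R_dist in *. set (s := sum_f_R0 (fun _ => c) N) in *.
  assert (Rabs c <= Rabs (s + c - c) + Rabs (s - c)).
  { replace c with ((s + c - c) - (s - c)) at 1 by ring.
    eapply Rle_trans. apply Rabs_triang. rewrite Rabs_Ropp. lra. }
  lra.
Qed.

Lemma prob_finadd (A : nat -> set T) n : (forall k, (k < n)%nat -> M (A k)) ->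
  (forall i j x, (i < n)%nat -> (j < n)%nat -> i <> j -> A i x -> A j x -> False) ->
  mu (fun x => exists k, (k < n)%nat /\ A k x) = rsum (fun k => mu (A k)) n.
Proof using HM Hmu.
  intros HA Hd. destruct Hmu as [_ [_ H]].
  set (B := fun k x => (k < n)%nat /\ A k x \/ ~ (k < n)%nat /\ False).
  assert (HB : forall k, M (B k)) by (apply sa_bounded_index; auto; intros; apply sa_empty; auto).
  assert (Hc := H B HB ltac:(unfold B; intros i j x Hij Hi Hj; eapply (Hd i j x); tauto)).
  assert (HBA : forall k, (k < n)%nat -> mu (B k) = mu (A k)).
  { intros k Hk; apply measure_ext; unfold B; tauto. }
  assert (HB0 : forall k, ~ (k < n)%nat -> mu (B k) = 0).
  { intros k Hk. rewrite <- prob_empty. apply measure_ext; unfold B; tauto. }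
  assert (Hc2 : Un_cv (fun N => sum_f_R0 (fun k => mu (B k)) N) (rsum (fun k => mu (A k)) n)).
  { intros e He; exists n; intros N HN. rewrite sum_f_rsum. unfold R_dist.
    assert (Hp : forall p, rsum (fun k => mu (B k)) (n + p) = rsum (fun k => mu (A k)) n).
    { induction p.
      - rewrite Nat.add_0_r. apply rsum_ext; auto.
      - rewrite Nat.add_succ_r; simpl; rewrite IHp, HB0 by lia. ring. }
    replace (S N) with (n + (S N - n))%nat by lia. rewrite Hp, Rminus_diag, Rabs_R0; auto. }
  rewrite <- (UL_sequence _ _ _ Hc Hc2). apply measure_ext.
  unfold B; intros x; split; intros [k Hk]; exists k; tauto.
Qed.

Lemma prob_add2 A B : M A -> M B -> (forall x, A x -> B x -> False) ->
  mu (fun x => A x \/ B x) = mu A + mu B.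
Proof using HM Hmu.
  intros HA HB Hd. set (AB := fun k => if Nat.eq_dec k 0 then A else B).
  replace (mu A + mu B) with (rsum (fun k => mu (AB k)) 2) by (unfold AB; simpl; ring).
  rewrite <- prob_finadd.
  - apply measure_ext. unfold AB; intros x; split.
    + intros [Ha|Hb]. exists 0%nat; split; auto; lia. exists 1%nat; split; auto; lia.
    + intros [k [Hk Hx]]. destruct (Nat.eq_dec k 0); auto.
  - unfold AB; intros k _; destruct (Nat.eq_dec k 0); auto.
  - unfold AB; intros i j x Hi Hj Hij. destruct (Nat.eq_dec i 0), (Nat.eq_dec j 0); try lia; eauto.
Qed.

Lemma prob_split A B : M A -> M B -> mu (fun x => A x \/ B x) = mu A + mu (fun x => B x /\ ~ A x).
Proof using HM Hmu.
  intros HA HB. rewrite <- prob_add2; [|auto|apply sa_diff; auto|tauto].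
  apply measure_ext. intros x; destruct (classic (A x)); tauto.
Qed.

Lemma prob_mono A B : M A -> M B -> (forall x, A x -> B x) -> mu A <= mu B.
Proof using HM Hmu.
  intros HA HB H. rewrite (measure_ext mu B (fun x => A x \/ B x)) by firstorder.
  rewrite prob_split; auto. assert (0 <= mu (fun x => B x /\ ~ A x)); [|lra].
  apply prob_nonneg, sa_diff; auto.
Qed.

Lemma prob_le1 A : M A -> mu A <= 1.
Proof using HM Hmu. intros; rewrite <- prob_T; apply prob_mono; auto. apply sa_T; auto. Qed.

Lemma prob_compl A : M A -> mu (fun x => ~ A x) = 1 - mu A.
Proof using HM Hmu.
  intros HA. rewrite <- prob_T, (measure_ext mu (fun _ => True) (fun x => A x \/ ~ A x))
    by (intros x; tauto).
  rewrite prob_add2; [ring | auto | apply sa_compl; auto | tauto].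
Qed.

Lemma prob_diff A B : M A -> M B -> (forall x, B x -> A x) -> mu (fun x => A x /\ ~ B x) = mu A - mu B.
Proof using HM Hmu.
  intros HA HB H. rewrite (measure_ext mu A (fun x => B x \/ A x)) by firstorder.
  rewrite prob_split; auto. ring.
Qed.

Lemma prob_sub2 A B : M A -> M B -> mu (fun x => A x \/ B x) <= mu A + mu B.
Proof using HM Hmu.
  intros HA HB. rewrite prob_split; auto.
  assert (mu (fun x => B x /\ ~ A x) <= mu B); [|lra].
  apply prob_mono; auto. apply sa_diff; auto. tauto.
Qed.

Lemma prob_finsub (A : nat -> set T) n : (forall k, (k < n)%nat -> M (A k)) ->
  mu (fun x => exists k, (k < n)%nat /\ A k x) <= rsum (fun k => mu (A k)) n.
Proof using HM Hmu.
  induction n; intros HA.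
  - simpl. rewrite (measure_ext mu _ (fun _ => False)), prob_empty; [lra|].
    intros x; split; [intros [k [Hk _]]; lia|tauto].
  - rewrite (measure_ext mu _ (fun x => (exists k, (k < n)%nat /\ A k x) \/ A n x)).
    + simpl. eapply Rle_trans. apply prob_sub2.
      * apply sa_fincup; auto; intros; apply HA; lia.
      * apply HA; lia.
      * assert (rsum (fun k => mu (A k)) n >= mu (fun x => exists k, (k < n)%nat /\ A k x));
          [apply Rle_ge, IHn; intros; apply HA; lia | lra].
    + intros x; split.
      * intros [k [Hk Ak]]. destruct (Nat.eq_dec k n). subst; auto. left; exists k; split; auto; lia.
      * intros [[k [Hk Ak]]|H]. exists k; split; auto. exists n; split; auto.
Qed.

(** Continuity from below, through the disjoint differences of the sequence. *)
Lemma prob_cont_below (Sq : nat -> set T) : (forall k, M (Sq k)) -> (forall k x, Sq k x -> Sq (S k) x) ->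
  Un_cv (fun k => mu (Sq k)) (mu (fun x => exists k, Sq k x)).
Proof using HM Hmu.
  intros HS Hinc. destruct Hmu as [_ [_ H]].
  set (Dd := fun k x => match k with O => Sq O x | S k' => Sq (S k') x /\ ~ Sq k' x end).
  assert (HD : forall k, M (Dd k)) by (intros [|k]; unfold Dd; auto; apply sa_diff; auto).
  assert (Hmono : forall i j x, (i <= j)%nat -> Sq i x -> Sq j x).
  { intros i j x Hij; induction Hij; auto. }
  assert (Hlt : forall x i j, (i < j)%nat -> Dd i x -> Dd j x -> False).
  { intros x i j Hl Hi Hj. destruct j. lia. destruct Hj as [_ Hj]. apply Hj.
    apply (Hmono i). lia. destruct i; simpl in Hi; tauto. }
  assert (Hdis : forall i j x, i <> j -> Dd i x -> Dd j x -> False).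
  { intros i j x Hij. destruct (Compare_dec.lt_dec i j); [eauto|].
    intros; eapply (Hlt x j i); eauto; lia. }
  specialize (H Dd HD Hdis).
  assert (Hs : forall N, sum_f_R0 (fun k => mu (Dd k)) N = mu (Sq N)).
  { induction N. simpl; auto. simpl. rewrite IHN. unfold Dd. rewrite (prob_diff (Sq (S N)) (Sq N)); auto. ring. }
  rewrite (measure_ext mu _ (fun x => exists k, Sq k x)) in H.
  - intros e He; destruct (H e He) as [N HN]; exists N; intros n Hn. rewrite <- Hs; auto.
  - intros x; split.
    + intros [k Hk]; destruct k; simpl in Hk; [exists O|exists (S k)]; tauto.
    + intros [k Hk]. induction k. exists O; auto.
      destruct (classic (Sq k x)). auto. exists (S k); simpl; tauto.
Qed.

Lemma prob_partition_sum (A : nat -> set T) K (S : set T) :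
  (forall j, (j < K)%nat -> M (A j)) -> (forall x, exists j, (j < K)%nat /\ A j x) ->
  (forall x i j, (i < K)%nat -> (j < K)%nat -> A i x -> A j x -> i = j) -> M S ->
  mu S = rsum (fun j => mu (fun x => S x /\ A j x)) K.
Proof using HM Hmu.
  intros HA Hc Hu HS. rewrite <- prob_finadd.
  - apply measure_ext. intros x; split.
    + intros Sx; destruct (Hc x) as [j [Hj Ax]]; exists j; auto.
    + intros [j [_ [? _]]]; auto.
  - intros; apply sa_inter; auto.
  - intros i j x Hi Hj Hij [_ Ai] [_ Aj]. apply Hij; eapply Hu; eauto.
Qed.

End Probability.
Arguments prob_nonneg {T M mu} Hmu.
Arguments prob_T {T M mu} Hmu.
Arguments prob_empty {T M} HM {mu} Hmu.
Arguments prob_finadd {T M} HM {mu} Hmu.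
Arguments prob_mono {T M} HM {mu} Hmu.
Arguments prob_le1 {T M} HM {mu} Hmu.
Arguments prob_compl {T M} HM {mu} Hmu.
Arguments prob_diff {T M} HM {mu} Hmu.
Arguments prob_sub2 {T M} HM {mu} Hmu.
Arguments prob_finsub {T M} HM {mu} Hmu.
Arguments prob_cont_below {T M} HM {mu} Hmu.
Arguments prob_partition_sum {T M} HM {mu} Hmu.

(** ** Borel sets of R and R^2 *)

Lemma borel_sa {T} (d : T -> T -> R) : is_sigma_algebra (borel d).
Proof.
  split; [|split].
  - intros F HF _; apply HF.
  - intros A HA F HF HU; apply HF; apply HA; auto.
  - intros A HA F HF HU; apply HF; intros k; apply HA; auto.
Qed.

Lemma open_borel {T} (d : T -> T -> R) U : metric_open d U -> borel d U.
Proof. intros HU F HF HO; auto. Qed.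

Lemma borel_ind {T} (d : T -> T -> R) (G : set T -> Prop) :
  is_sigma_algebra G -> (forall U, metric_open d U -> G U) -> forall A, borel d A -> G A.
Proof. intros HG HO A HA; apply HA; auto. Qed.

Lemma dist2_fst p q : Rabs (fst p - fst q) <= dist2 p q.
Proof.
  unfold dist2. rewrite <- sqrt_Rsqr_abs. apply sqrt_le_1_alt.
  unfold Rsqr. assert (H := pow2_ge_0 (snd p - snd q)). simpl; lra.
Qed.

Lemma dist2_snd p q : Rabs (snd p - snd q) <= dist2 p q.
Proof.
  unfold dist2. rewrite <- sqrt_Rsqr_abs. apply sqrt_le_1_alt.
  unfold Rsqr. assert (H := pow2_ge_0 (fst p - fst q)). simpl; lra.
Qed.

Lemma dist2_le_sum p q : dist2 p q <= Rabs (fst p - fst q) + Rabs (snd p - snd q).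
Proof.
  assert (H1 := Rabs_pos (fst p - fst q)). assert (H2 := Rabs_pos (snd p - snd q)).
  unfold dist2. rewrite <- (sqrt_Rsqr (Rabs (fst p - fst q) + Rabs (snd p - snd q))) by lra.
  apply sqrt_le_1_alt. unfold Rsqr.
  rewrite <- (pow2_abs (fst p - fst q)), <- (pow2_abs (snd p - snd q)). nra.
Qed.

Lemma dist2_sym p q : dist2 p q = dist2 q p.
Proof. unfold dist2. f_equal. ring. Qed.

Lemma dist2_tri p q r : dist2 p q <= dist2 p r + dist2 r q.
Proof.
  destruct p as [a b], q as [c d], r as [e f]. unfold dist2, fst, snd.
  assert (H := triangle a b c d e f). unfold dist_euc, Rsqr in H.
  simpl. rewrite !Rmult_1_r. exact H.
Qed.

Lemma dist2_same_snd x x' y : dist2 (x, y) (x', y) = Rabs (x - x').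
Proof.
  unfold dist2, fst, snd.
  replace ((x - x') ^ 2 + (y - y) ^ 2) with (Rsqr (x - x')) by (unfold Rsqr; ring).
  apply sqrt_Rsqr_abs.
Qed.

Lemma enlarge_borel2 A e : borel2 (enlarge dist2 A e).
Proof.
  apply open_borel. intros x [y [Hy Hd]]. exists (e - dist2 x y); split. lra.
  intros z Hz. exists y; split; auto.
  assert (H := dist2_tri z y x). rewrite (dist2_sym z x) in H. lra.
Qed.

Lemma borel1_lt c : borel1 (fun x => x < c).
Proof.
  apply open_borel. intros x Hx. exists (c - x); split. lra.
  intros y Hy. unfold dist1 in Hy. assert (H := Rle_abs (y - x)). rewrite Rabs_minus_sym in Hy. lra.
Qed.

Lemma borel1_ge c : borel1 (fun x => c <= x).
Proof.
  apply (sa_ext (borel_sa dist1) (fun x => ~ x < c)). intros; lra.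
  apply sa_compl. apply borel_sa. apply borel1_lt.
Qed.

Lemma borel1_ico c d : borel1 (fun x => c <= x /\ x < d).
Proof. apply sa_inter. apply borel_sa. apply borel1_ge. apply borel1_lt. Qed.

Lemma borel2_preimage (f : R * R -> R) : (forall p q, Rabs (f p - f q) <= dist2 p q) ->
  forall B, borel1 B -> borel2 (fun p => B (f p)).
Proof.
  intros Hf. apply (borel_ind dist1 (fun B => borel2 (fun p => B (f p)))).
  - split; [|split].
    + apply sa_T, borel_sa.
    + intros A HA; apply sa_compl; auto; apply borel_sa.
    + intros A HA; apply (sa_cup (borel_sa dist2) (fun k p => A k (f p))); auto.
  - intros U HU. apply open_borel. intros p Hp. destruct (HU _ Hp) as [r [Hr H]].
    exists r; split; auto. intros q Hq. apply H. unfold dist1. eapply Rle_lt_trans; [apply Hf|]. auto.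
Qed.

Lemma borel2_fst B : borel1 B -> borel2 (fun p => B (fst p)).
Proof. apply borel2_preimage, dist2_fst. Qed.

Lemma borel2_snd B : borel1 B -> borel2 (fun p => B (snd p)).
Proof. apply borel2_preimage, dist2_snd. Qed.

Lemma borel2_rect A B : borel1 A -> borel1 B -> borel2 (fun p => A (fst p) /\ B (snd p)).
Proof. intros; apply sa_inter. apply borel_sa. apply borel2_fst; auto. apply borel2_snd; auto. Qed.

Lemma marginal_prob (P : set (R * R) -> R) (f : R * R -> R) :
  (forall p q, Rabs (f p - f q) <= dist2 p q) ->
  is_probability borel2 P -> is_probability borel1 (fun B => P (fun p => B (f p))).
Proof.
  intros Hf [H1 [H2 H3]]. split; [|split].
  - intros A HA. apply H1, borel2_preimage; auto.
  - auto.
  - intros A HA Hd. apply (H3 (fun k p => A k (f p))).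
    + intros; apply borel2_preimage; auto.
    + intros i j x; apply Hd.
Qed.

(** The grid with origin [a], mesh [h > 0] and [N] steps cuts R into the
  [N + 2] intervals [(-oo, a)], [[a + (j-1) h, a + j h)] for [1 <= j <= N],
  and [[a + N h, +oo)], indexed by [j < N + 2]. *)

Definition grid_int (a h : R) (N : nat) (j : nat) (x : R) : Prop :=
  (j = 0%nat /\ x < a) \/
  ((1 <= j <= N)%nat /\ a + INR (j - 1) * h <= x /\ x < a + INR j * h) \/
  (j = S N /\ a + INR N * h <= x).

Lemma grid_int_borel a h N j : borel1 (grid_int a h N j).
Proof.
  unfold grid_int. assert (HS := borel_sa dist1).
  apply sa_union; auto; [|apply sa_union; auto]; apply sa_inter; auto; try apply sa_const; auto.
  - apply borel1_lt.
  - apply (sa_ext HS (fun x => a + INR (j - 1) * h <= x /\ x < a + INR j * h)). tauto. apply borel1_ico.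
  - apply borel1_ge.
Qed.

Lemma grid_int_range a h N j x : grid_int a h N j x -> (j < S (S N))%nat.
Proof. unfold grid_int; intros [[->]|[[? _]|[-> _]]]; lia. Qed.

(** Every point lies in some interval: the index of an inner point is
    [up ((x - a) / h)]. *)
Lemma grid_int_exists a h N x : 0 < h -> exists j, grid_int a h N j x.
Proof.
  intros Hh. destruct (Rlt_dec x a). exists 0%nat; left; auto.
  destruct (Rle_dec (a + INR N * h) x). exists (S N); right; right; auto.
  destruct (archimed ((x - a) / h)) as [H1 H2].
  set (k := up ((x - a) / h)) in *.
  assert (Hxa : 0 <= (x - a) / h) by (unfold Rdiv; apply Rmult_le_pos; [lra|apply Rlt_le, Rinv_0_lt_compat; lra]).
  assert (Hk1 : (1 <= k)%Z) by (assert (0 < k)%Z by (apply lt_IZR; simpl; lra); lia).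
  assert (HkN : (x - a) / h < INR N).
  { apply (Rmult_lt_reg_r h); auto. unfold Rdiv; rewrite Rmult_assoc, Rinv_l; lra. }
  assert (Hk2 : (k <= Z.of_nat N)%Z).
  { assert (k - 1 < Z.of_nat N)%Z; [|lia].
    apply lt_IZR. rewrite minus_IZR, <- INR_IZR_INZ; simpl; lra. }
  exists (Z.to_nat k). right; left. split. lia.
  assert (Ek : INR (Z.to_nat k) = IZR k) by (rewrite INR_IZR_INZ, Z2Nat.id; auto; lia).
  assert (Ek1 : INR (Z.to_nat k - 1) = IZR k - 1) by (rewrite minus_INR by lia; rewrite Ek; simpl; lra).
  rewrite Ek, Ek1. split.
  - assert (H : IZR k - 1 <= (x - a) / h) by lra.
    apply (Rmult_le_compat_r h) in H; [|lra]. unfold Rdiv in H; rewrite Rmult_assoc, Rinv_l in H; lra.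
  - apply (Rmult_lt_compat_r h) in H1; [|lra]. unfold Rdiv in H1; rewrite Rmult_assoc, Rinv_l in H1; lra.
Qed.

Lemma grid_int_unique a h N x i j : 0 < h -> grid_int a h N i x -> grid_int a h N j x -> i = j.
Proof.
  intros Hh.
  assert (Hlt : forall i j, (i < j)%nat -> grid_int a h N i x -> grid_int a h N j x -> False).
  { clear i j. intros i j Hij Hi Hj. unfold grid_int in *. assert (HN := pos_INR N).
    destruct Hi as [[-> Hi]|[[Hi1 [Hi2 Hi3]]|[-> Hi]]];
      destruct Hj as [[-> Hj]|[[Hj1 [Hj2 Hj3]]|[-> Hj]]]; try lia.
    - assert (0 <= INR (j - 1)) by apply pos_INR. nra.
    - nra.
    - assert (INR i <= INR (j - 1)) by (apply le_INR; lia). nra.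
    - assert (INR i <= INR N) by (apply le_INR; lia). nra. }
  intros Hi Hj. destruct (Nat.lt_trichotomy i j) as [?|[?|?]]; auto; exfalso; eauto.
Qed.

Lemma grid_int_cover a h N x : 0 < h -> exists j, (j < S (S N))%nat /\ grid_int a h N j x.
Proof.
  intros Hh; destruct (grid_int_exists a h N x Hh) as [j Hj]. exists j; split; auto.
  eapply grid_int_range; eauto.
Qed.

Lemma grid_int_total (mu : set R -> R) a h N : is_probability borel1 mu -> 0 < h ->
  rsum (fun j => mu (grid_int a h N j)) (S (S N)) = 1.
Proof.
  intros Hmu Hh. rewrite <- (prob_T Hmu).
  rewrite (prob_partition_sum (borel_sa dist1) Hmu (grid_int a h N) (S (S N)) (fun _ => True)).
  - apply rsum_ext; intros. apply measure_ext; tauto.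
  - intros; apply grid_int_borel.
  - intros; apply grid_int_cover; auto.
  - intros x i j _ _; apply grid_int_unique; auto.
  - apply sa_T, borel_sa.
Qed.

Definition grid_index (a h : R) (N : nat) (x : R) : nat :=
  epsilon (inhabits O) (fun j => grid_int a h N j x).

Lemma grid_index_spec a h N x : 0 < h -> grid_int a h N (grid_index a h N x) x.
Proof. intros Hh. unfold grid_index. apply epsilon_spec. apply grid_int_exists; auto. Qed.

Lemma grid_index_eq a h N x j : 0 < h -> grid_int a h N j x -> grid_index a h N x = j.
Proof. intros Hh Hj. eapply grid_int_unique; eauto. apply grid_index_spec; auto. Qed.

Lemma grid_int_close a h N j u v : 0 < h -> a <= u -> u < a + INR N * h ->
  grid_int a h N j u -> grid_int a h N j v -> Rabs (u - v) < h.
Proof.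
  intros Hh H1 H2 Hu Hv. unfold grid_int in *.
  destruct Hu as [[-> Hu]|[[Hj [Hu1 Hu2]]|[-> Hu]]]; try lra.
  destruct Hv as [[Hv _]|[[_ [Hv1 Hv2]]|[Hv _]]]; try lia.
  assert (E : INR j = INR (j - 1) + 1) by (rewrite <- S_INR; f_equal; lia).
  rewrite E in Hu2, Hv2. apply Rabs_def1; nra.
Qed.

Definition near_grid (a h : R) (N : nat) (w : R) (u : R) : Prop :=
  exists j, (j <= N)%nat /\ Rabs (u - (a + INR j * h)) < w.

Lemma near_grid_borel a h N w : borel1 (near_grid a h N w).
Proof.
  apply open_borel. intros u [j [Hj Hu]]. exists (w - Rabs (u - (a + INR j * h))); split. lra.
  intros v Hv. exists j; split; auto. unfold dist1 in Hv.
  assert (Rabs (v - (a + INR j * h)) <= Rabs (v - u) + Rabs (u - (a + INR j * h))).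
  { replace (v - (a + INR j * h)) with ((v - u) + (u - (a + INR j * h))) by ring. apply Rabs_triang. }
  rewrite Rabs_minus_sym in Hv. lra.
Qed.

(** Two points closer than [w] lying in different intervals are separated by a
    grid point, hence both lie near the grid. *)
Lemma grid_int_boundary a h N j u v w : 0 < h -> grid_int a h N j u -> ~ grid_int a h N j v ->
  Rabs (u - v) < w -> near_grid a h N w v /\ near_grid a h N w u.
Proof.
  intros Hh Hu Hv Hw.
  destruct (grid_int_exists a h N v Hh) as [j' Hj'].
  assert (Hne : j <> j') by (intros ->; auto).
  assert (Hsep : forall t, (t <= N)%nat -> (u < a + INR t * h <= v \/ v < a + INR t * h <= u) ->
    near_grid a h N w v /\ near_grid a h N w u).
  { intros t Ht Hbt. split; exists t; split; auto;
      unfold Rabs in *; repeat destruct Rcase_abs; lra. }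
  unfold grid_int in Hu, Hj'. assert (HN := pos_INR N).
  assert (Hjh : forall i, 0 <= INR i * h) by (intros; apply Rmult_le_pos; [apply pos_INR|lra]).
  destruct Hu as [[-> Hu]|[[Hu1 [Hu2 Hu3]]|[-> Hu]]];
    destruct Hj' as [[-> Hj]|[[Hj1 [Hj2 Hj3]]|[-> Hj]]]; try lia.
  - apply (Hsep 0%nat); [lia|]. simpl. assert (H := Hjh (j' - 1)%nat). lra.
  - apply (Hsep 0%nat); [lia|]. simpl. assert (H := Hjh N). lra.
  - apply (Hsep (j - 1)%nat); [lia|]. assert (H := Hjh (j - 1)%nat). lra.
  - destruct (Nat.lt_trichotomy j j') as [Hl|[Hl|Hl]]; [|lia|].
    + apply (Hsep j); [lia|]. assert (INR j <= INR (j' - 1)) by (apply le_INR; lia). nra.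
    + apply (Hsep (j - 1)%nat); [lia|]. assert (INR j' <= INR (j - 1)) by (apply le_INR; lia). nra.
  - apply (Hsep j); [lia|]. assert (INR j <= INR N) by (apply le_INR; lia). nra.
  - apply (Hsep N); [lia|]. assert (H := Hjh N). lra.
  - apply (Hsep N); [lia|]. assert (INR j' <= INR N) by (apply le_INR; lia). nra.
Qed.

(** ** Prokhorov distance and empirical measures *)

Lemma glb_exists (S : R -> Prop) x0 : S x0 -> (forall x, S x -> 0 < x) -> exists m, is_glb S m.
Proof.
  intros H0 Hpos. destruct (completeness (fun x => S (- x))) as [m [Hm1 Hm2]].
  - exists 0. intros x Hx. apply Hpos in Hx. lra.
  - exists (- x0). rewrite Ropp_involutive; auto.
  - exists (- m). split.
    + intros x Hx. assert (- x <= m) by (apply Hm1; rewrite Ropp_involutive; auto). lra.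
    + intros m' Hm'. assert (m <= - m'); [|lra].
      apply Hm2. intros x Hx. apply Hm' in Hx. lra.
Qed.

Lemma prokhorov_lt_iff {T} (d : T -> T -> R) P1 P2 eps :
  prokhorov_lt d P1 P2 eps <-> exists e, e < eps /\ prokhorov_ok d P1 P2 e.
Proof.
  split.
  - intros [m [[H1 H2] Hm]]. apply NNPP; intros Hn.
    assert (eps <= m); [|lra].
    apply H2. intros x Hx. apply Rnot_lt_le; intros Hl. apply Hn; eauto.
  - intros [e [He Hok]]. destruct (glb_exists (prokhorov_ok d P1 P2) e Hok) as [m Hm].
    + intros x [Hx _]; auto.
    + exists m; split; auto. destruct Hm as [Hm _]. apply Hm in Hok. lra.
Qed.

Lemma ind_mono {T} (A B : set T) x y : (A x -> B y) -> ind A x <= ind B y.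
Proof. unfold ind; do 2 destruct excluded_middle_informative; try lra; tauto. Qed.
Lemma ind_compl {T} (A : set T) x : ind (fun y => ~ A y) x = 1 - ind A x.
Proof. unfold ind; do 2 destruct excluded_middle_informative; try lra; tauto. Qed.
Lemma ind_true {T} (A : set T) x : A x -> ind A x = 1.
Proof. unfold ind; destruct excluded_middle_informative; tauto. Qed.
Lemma ind_false {T} (A : set T) x : ~ A x -> ind A x = 0.
Proof. unfold ind; destruct excluded_middle_informative; tauto. Qed.

Lemma empirical_transport {T} n (pts pts' : nat -> T) (A B : set T) :
  (forall i, (i < n)%nat -> A (pts i) -> B (pts' i)) -> empirical n pts A <= empirical n pts' B.
Proof.
  intros H. unfold empirical. apply Rmult_le_compat_l.
  - destruct n. simpl; rewrite Rinv_0; lra. apply Rlt_le, Rinv_0_lt_compat, lt_0_INR; lia.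
  - apply rsum_le. intros i Hi; apply ind_mono; auto.
Qed.

Lemma empirical_compl {T} n (pts : nat -> T) A : (1 <= n)%nat ->
  empirical n pts (fun x => ~ A x) = 1 - empirical n pts A.
Proof.
  intros Hn. unfold empirical. rewrite (rsum_ext _ (fun i => 1 - ind A (pts i))) by (intros; apply ind_compl).
  rewrite rsum_minus, rsum_const. field. apply not_0_INR; lia.
Qed.

Lemma enlarge_enlarge A e f x : enlarge dist2 (enlarge dist2 A e) f x -> enlarge dist2 A (e + f) x.
Proof. intros [y [[z [Hz Hyz]] Hxy]]. exists z; split; auto. assert (H := dist2_tri x z y). lra. Qed.

Lemma prokhorov_ok_shift (P : set (R * R) -> R) n (pts pts' : nat -> R * R) e eta :
  is_probability borel2 P -> 0 < eta -> (forall i, (i < n)%nat -> dist2 (pts i) (pts' i) < eta) ->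
  prokhorov_ok dist2 (empirical n pts) P e -> prokhorov_ok dist2 (empirical n pts') P (e + eta).
Proof.
  intros HP Heta Hd [He Hok]. split. lra. intros A HA. split.
  - assert (empirical n pts' A <= empirical n pts (enlarge dist2 A eta)).
    { apply empirical_transport. intros i Hi HAi. exists (pts' i); split; auto. }
    destruct (Hok (enlarge dist2 A eta) (enlarge_borel2 _ _)) as [H1 _].
    assert (P (enlarge dist2 (enlarge dist2 A eta) e) <= P (enlarge dist2 A (e + eta))).
    { apply (prob_mono (borel_sa dist2) HP); [apply enlarge_borel2 | apply enlarge_borel2 |].
      intros x Hx. apply enlarge_enlarge in Hx. rewrite Rplus_comm; auto. }
    lra.
  - destruct (Hok A HA) as [_ H2].
    assert (empirical n pts (enlarge dist2 A e) <= empirical n pts' (enlarge dist2 A (e + eta))).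
    { apply empirical_transport. intros i Hi HAi. apply enlarge_enlarge.
      exists (pts i); split; auto. rewrite dist2_sym; auto. }
    lra.
Qed.

Definition grid_cell a b h N j l (p : R * R) : Prop :=
  grid_int a h N j (fst p) /\ grid_int b h N l (snd p).

Definition grid_strip a b h N w (p : R * R) : Prop :=
  near_grid a h N w (fst p) \/ near_grid b h N w (snd p).

Lemma grid_cell_borel a b h N j l : borel2 (grid_cell a b h N j l).
Proof. apply borel2_rect; apply grid_int_borel. Qed.

Lemma grid_strip_borel a b h N w : borel2 (grid_strip a b h N w).
Proof. apply sa_union. apply borel_sa. apply borel2_fst, near_grid_borel. apply borel2_snd, near_grid_borel. Qed.

Lemma near_grid_of_mismatch a h N j u v w : 0 < h -> Rabs (u - v) < w ->
  ~ (grid_int a h N j u <-> grid_int a h N j v) -> near_grid a h N w u.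
Proof.
  intros Hh Hw Hn. destruct (classic (grid_int a h N j u)) as [Hu|Hu].
  - apply (grid_int_boundary a h N j u v w); auto; tauto.
  - apply (grid_int_boundary a h N j v u w); auto; [tauto|rewrite Rabs_minus_sym; auto].
Qed.

Lemma grid_cell_or_strip a b h N j l w x y : 0 < h -> dist2 x y < w ->
  (grid_cell a b h N j l x <-> grid_cell a b h N j l y) \/ grid_strip a b h N w x.
Proof.
  intros Hh Hd. unfold grid_cell, grid_strip.
  assert (H1 := Rle_lt_trans _ _ _ (dist2_fst x y) Hd).
  assert (H2 := Rle_lt_trans _ _ _ (dist2_snd x y) Hd).
  destruct (classic (grid_int a h N j (fst x) <-> grid_int a h N j (fst y))) as [E1|E1];
    [destruct (classic (grid_int b h N l (snd x) <-> grid_int b h N l (snd y))) as [E2|E2]|].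
  - left; tauto.
  - right; right; eapply near_grid_of_mismatch; eauto.
  - right; left; eapply near_grid_of_mismatch; eauto.
Qed.

Lemma enlarge_cell_or_strip a b h N j l w e (C : set (R * R)) x : 0 < h -> e <= w ->
  (C = grid_cell a b h N j l \/ C = fun p => ~ grid_cell a b h N j l p) ->
  enlarge dist2 C e x -> C x \/ grid_strip a b h N w x.
Proof.
  intros Hh Hew HC [y [Hy Hd]].
  destruct (grid_cell_or_strip a b h N j l w x y Hh ltac:(lra)) as [E|E]; auto.
  left. destruct HC as [->| ->]; tauto.
Qed.

Lemma cell_frequency_close (P : set (R * R) -> R) n pts a b h N j l eps w :
  is_probability borel2 P -> 0 < h -> (1 <= n)%nat -> eps <= w ->
  prokhorov_lt dist2 (empirical n pts) P eps ->
  Rabs (empirical n pts (grid_cell a b h N j l) - P (grid_cell a b h N j l))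
    <= P (grid_strip a b h N w) + eps.
Proof.
  intros HP Hh Hn Hew Hlt. apply prokhorov_lt_iff in Hlt. destruct Hlt as [e [He [He0 Hok]]].
  set (C := grid_cell a b h N j l). set (Cc := fun p => ~ C p).
  assert (HS := borel_sa dist2). assert (HC : borel2 C) by apply grid_cell_borel.
  assert (HCc : borel2 Cc) by (apply sa_compl; auto). assert (Hs := grid_strip_borel a b h N w).
  assert (Henl : forall D, D = C \/ D = Cc -> borel2 D ->
    P (enlarge dist2 D e) <= P D + P (grid_strip a b h N w)).
  { intros D HD HDb. eapply Rle_trans; [|apply (prob_sub2 HS HP); auto].
    apply (prob_mono HS HP). apply enlarge_borel2. apply sa_union; auto.
    intros x Hx. apply (enlarge_cell_or_strip a b h N j l w e D x Hh); [lra | exact HD | exact Hx]. }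
  destruct (Hok _ HC) as [H1 _]. destruct (Hok _ HCc) as [H2 _].
  assert (E1 := Henl C (or_introl eq_refl) HC). assert (E2 := Henl Cc (or_intror eq_refl) HCc).
  unfold Cc in E2, H2. rewrite (prob_compl HS HP) in E2 by auto. rewrite empirical_compl in H2 by auto.
  apply Rabs_le. lra.
Qed.

(** ** Cell indices of i.i.d. samples

  For [s : nat -> nat], [index_sum K n f] sums [f s] over all index
  assignments [s 0, ..., s (n-1) < K] (the remaining values are fixed to 0). *)

Definition update (s : nat -> nat) (k j : nat) : nat -> nat :=
  fun i => if Nat.eq_dec i k then j else s i.

Fixpoint index_sum (K n : nat) (f : (nat -> nat) -> R) : R :=
  match n with
  | O => f (fun _ => O)
  | S n' => rsum (fun j => index_sum K n' (fun s => f (update s n' j))) K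
  end.

Lemma index_sum_ext K n f g : (forall s, f s = g s) -> index_sum K n f = index_sum K n g.
Proof. revert f g; induction n; intros f g H; simpl; auto. apply rsum_ext; intros; apply IHn; auto. Qed.

Lemma index_sum_le K n f g : (forall s, f s <= g s) -> index_sum K n f <= index_sum K n g.
Proof. revert f g; induction n; intros f g H; simpl; auto. apply rsum_le; intros; apply IHn; auto. Qed.

Lemma index_sum_scal K n f c : index_sum K n (fun s => f s * c) = index_sum K n f * c.
Proof.
  revert f; induction n; intros f; simpl; auto.
  rewrite (rsum_ext _ (fun j => index_sum K n (fun s => f (update s n j)) * c))
    by (intros; apply (IHn (fun s => f (update s n k)))).
  rewrite Rmult_comm, <- rsum_scal. apply rsum_ext; intros; ring.
Qed.

Lemma index_sum_prod K n (phi : nat -> nat -> R) :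
  index_sum K n (fun s => rprod (fun i => phi i (s i)) n) = rprod (fun i => rsum (phi i) K) n.
Proof.
  induction n. simpl; auto. simpl index_sum.
  rewrite (rsum_ext _ (fun j => index_sum K n (fun s => rprod (fun i => phi i (s i)) n) * phi n j)).
  - rewrite IHn. simpl rprod. rewrite <- rsum_scal. apply rsum_ext; intros; ring.
  - intros j Hj. rewrite <- index_sum_scal. apply index_sum_ext. intros s. simpl.
    unfold update at 2. destruct (Nat.eq_dec n n); [|lia]. f_equal.
    apply rprod_ext. intros k Hk. unfold update; destruct (Nat.eq_dec k n); auto; lia.
Qed.

Definition depends_on_first (n : nat) (G : (nat -> nat) -> Prop) :=
  forall s s', (forall i, (i < n)%nat -> s i = s' i) -> G s -> G s'.

Section IidCells.
Context (Omega : Type) (F : set Omega -> Prop) (HF : is_sigma_algebra F)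
  (Pr : set Omega -> R) (HPr : is_probability F Pr)
  (PZ : set R -> R) (HPZ : is_probability borel1 PZ) (Z : nat -> Omega -> R)
  (HZmeas : forall i B, borel1 B -> F (fun w => B (Z i w)))
  (HZiid : forall (n : nat) (B : nat -> set R), (forall i, borel1 (B i)) ->
      Pr (fun w => forall i, (i < n)%nat -> B i (Z i w)) = rprod (fun i => PZ (B i)) n).

Definition cell_indices (a h : R) (N : nat) (w : Omega) : nat -> nat :=
  fun i => grid_index a h N (Z i w).

Section Cylinder.
Context (a h : R) (N : nat) (Hh : 0 < h).

Definition cylinder (n m : nat) (G : (nat -> nat) -> Prop) (B : nat -> set R) : set Omega :=
  fun w => G (cell_indices a h N w) /\ forall i, (n <= i < m)%nat -> B i (Z i w).

Lemma cylinder_split n m G B : depends_on_first (S n) G -> (n < m)%nat ->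
  forall w, cylinder (S n) m G B w <->
    exists j, (j < S (S N))%nat /\
      cylinder n m (fun s => G (update s n j))
        (fun i => if Nat.eq_dec i n then grid_int a h N j else B i) w.
Proof using Hh.
  intros HG Hm w. unfold cylinder. split.
  - intros [HGw HBw]. exists (cell_indices a h N w n). split.
    { eapply grid_int_range. apply grid_index_spec; auto. }
    split.
    + apply (HG (cell_indices a h N w)); auto.
      intros i Hi. unfold update; destruct (Nat.eq_dec i n); subst; auto.
    + intros i Hi. destruct (Nat.eq_dec i n). subst; apply grid_index_spec; auto. apply HBw; lia.
  - intros [j [Hj [HGw HBw]]].
    assert (Hjn : cell_indices a h N w n = j).
    { apply grid_index_eq; auto. assert (H := HBw n ltac:(lia)).
      destruct (Nat.eq_dec n n); auto; lia. }
    split.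
    + apply (HG (update (cell_indices a h N w) n j)); auto.
      intros i Hi. unfold update; destruct (Nat.eq_dec i n); subst; auto.
    + intros i Hi. assert (H := HBw i ltac:(lia)). destruct (Nat.eq_dec i n); auto; lia.
Qed.

Lemma cylinder_prob_aux n : forall (G : (nat -> nat) -> Prop) (B : nat -> set R) m,
  depends_on_first n G -> (forall i, borel1 (B i)) -> (n <= m)%nat ->
  F (cylinder n m G B) /\
  Pr (cylinder n m G B) = index_sum (S (S N)) n (fun s =>
    ind G s * rprod (fun i => PZ (if Nat.ltb i n then grid_int a h N (s i) else B i)) m).
Proof using HF HPr HZmeas HZiid Hh.
  induction n; intros G B m HG HB Hm.
  - simpl. destruct (classic (G (fun _ => O))) as [G0|G0].
    + assert (HGa : forall s, G s) by (intros s; apply (HG (fun _ => O)); auto; intros; lia).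
      rewrite (set_ext (cylinder 0 m G B) (fun w => forall i, (i < m)%nat -> B i (Z i w))).
      * rewrite ind_true by auto. split. apply sa_fincap; auto. rewrite HZiid; auto. ring.
      * unfold cylinder; intros w; split. intros [_ H] i Hi; apply H; lia.
        intros H; split; auto. intros i Hi; apply H; lia.
    + rewrite (set_ext (cylinder 0 m G B) (fun _ => False)).
      * rewrite ind_false by auto. split. apply sa_empty; auto. rewrite (prob_empty HF HPr). ring.
      * unfold cylinder; intros w; split; [|tauto]. intros [H _]. apply G0.
        apply (HG (cell_indices a h N w)); auto. intros; lia.
  - set (Gj := fun j s => G (update s n j)).
    set (Bj := fun j i => if Nat.eq_dec i n then grid_int a h N j else B i).
    assert (HGj : forall j, depends_on_first n (Gj j)).
    { intros j s s' Hs. unfold Gj. apply HG. intros i Hi. unfold update.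
      destruct (Nat.eq_dec i n); auto. apply Hs; lia. }
    assert (HBj : forall j i, borel1 (Bj j i)).
    { intros j i; unfold Bj; destruct (Nat.eq_dec i n); auto. apply grid_int_borel. }
    assert (IH := fun j => IHn (Gj j) (Bj j) m (HGj j) (HBj j) ltac:(lia)).
    rewrite (set_ext _ _ (cylinder_split n m G B HG ltac:(lia))). split.
    + apply sa_fincup; auto. intros j _. apply (IH j).
    + rewrite (prob_finadd HF HPr).
      * cbn [index_sum]. apply rsum_ext. intros j Hj.
        transitivity (Pr (cylinder n m (Gj j) (Bj j))); [reflexivity|]. rewrite (proj2 (IH j)).
        apply index_sum_ext. intros s. f_equal. apply rprod_ext. intros i Hi.
        unfold Bj, update. destruct (Nat.eq_dec i n).
        -- subst. rewrite (proj2 (Nat.ltb_lt n (S n))), (proj2 (Nat.ltb_ge n n)) by lia. auto.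
        -- destruct (Nat.ltb i n) eqn:E1; destruct (Nat.ltb i (S n)) eqn:E2; auto.
           ++ apply Nat.ltb_lt in E1; apply Nat.ltb_ge in E2; lia.
           ++ apply Nat.ltb_ge in E1; apply Nat.ltb_lt in E2; lia.
      * intros j _; apply (IH j).
      * intros i j w Hi Hj Hij [_ H1] [_ H2]. apply Hij.
        assert (A1 := H1 n ltac:(lia)). assert (A2 := H2 n ltac:(lia)).
        destruct (Nat.eq_dec n n); [|lia]. eapply grid_int_unique; eauto.
Qed.

Lemma cylinder_prob n (G : (nat -> nat) -> Prop) : depends_on_first n G ->
  F (fun w => G (cell_indices a h N w)) /\
  Pr (fun w => G (cell_indices a h N w)) =
    index_sum (S (S N)) n (fun s => ind G s * rprod (fun i => PZ (grid_int a h N (s i))) n).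
Proof using HF HPr HZmeas HZiid Hh.
  intros HG.
  destruct (cylinder_prob_aux n G (fun _ _ => True) n HG) as [H1 H2]; auto.
  { intros; apply sa_T, borel_sa. }
  rewrite (set_ext (cylinder n n G (fun _ _ => True)) (fun w => G (cell_indices a h N w))) in H1, H2
    by (unfold cylinder; intros w; split; [tauto|]; intros; split; auto).
  split; auto. rewrite H2. apply index_sum_ext; intros s. f_equal.
  apply rprod_ext. intros i Hi. rewrite (proj2 (Nat.ltb_lt i n)); auto.
Qed.

Definition cell_mgf (lam : nat -> nat -> R) (l : nat) : R :=
  rsum (fun j => PZ (grid_int a h N j) * exp (lam j l)) (S (S N)).

Lemma chernoff n (lam : nat -> nat -> R) (ly : nat -> nat) thr :
  F (fun w => INR n * thr <= rsum (fun i => lam (cell_indices a h N w i) (ly i)) n) /\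
  Pr (fun w => INR n * thr <= rsum (fun i => lam (cell_indices a h N w i) (ly i)) n) <=
    rprod (fun i => cell_mgf lam (ly i) * exp (- thr)) n.
Proof using HF HPr HPZ HZmeas HZiid Hh.
  set (Gd := fun s : nat -> nat => INR n * thr <= rsum (fun i => lam (s i) (ly i)) n).
  assert (HG : depends_on_first n Gd).
  { intros s s' Hs H. unfold Gd in *. rewrite (rsum_ext _ (fun i => lam (s i) (ly i))); auto.
    intros k Hk; rewrite Hs; auto. }
  destruct (cylinder_prob n Gd HG) as [H1 H2]. split; auto. unfold Gd in H2. rewrite H2.
  rewrite (rprod_ext _ (fun i => rsum (fun j => PZ (grid_int a h N j) * exp (lam j (ly i) - thr)) (S (S N))))
    by (intros; unfold cell_mgf; rewrite Rmult_comm, <- rsum_scal; apply rsum_ext; intros;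
        unfold Rminus; rewrite exp_plus; ring).
  rewrite <- index_sum_prod. apply index_sum_le. intros s.
  rewrite rprod_mult, rprod_exp. unfold ind. destruct excluded_middle_informative as [Hg|Hg].
  - rewrite Rmult_1_l. rewrite <- (Rmult_1_r (rprod _ n)) at 1. apply Rmult_le_compat_l.
    + apply rprod_nonneg; intros; apply (prob_nonneg HPZ), grid_int_borel.
    + rewrite rsum_minus, rsum_const.
      assert (HH := exp_ineq1_le (rsum (fun i => lam (s i) (ly i)) n - INR n * thr)). lra.
  - rewrite Rmult_0_l. apply Rmult_le_pos.
    + apply rprod_nonneg; intros; apply (prob_nonneg HPZ), grid_int_borel.
    + apply Rlt_le, exp_pos.
Qed.

Lemma cell_mgf_bounds lam Lam l : (forall j l, Rabs (lam j l) <= Lam) ->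
  0 <= cell_mgf lam l <= exp Lam.
Proof using HPZ Hh.
  intros Hlam. assert (HPZj : forall j, 0 <= PZ (grid_int a h N j))
    by (intros; apply (prob_nonneg HPZ), grid_int_borel).
  split.
  - apply rsum_nonneg; intros; apply Rmult_le_pos; auto. apply Rlt_le, exp_pos.
  - unfold cell_mgf. rewrite <- (Rmult_1_r (exp Lam)), <- (grid_int_total PZ a h N HPZ Hh), <- rsum_scal.
    apply rsum_le. intros j _. rewrite (Rmult_comm (exp Lam)). apply Rmult_le_compat_l; auto.
    apply exp_le_of_abs; auto.
Qed.

(** Exponential form of the Chernoff bound, using [x <= e^(x-1)]. *)
Lemma chernoff_exp n (lam : nat -> nat -> R) (ly : nat -> nat) thr :
  F (fun w => INR n * thr <= rsum (fun i => lam (cell_indices a h N w i) (ly i)) n) /\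
  Pr (fun w => INR n * thr <= rsum (fun i => lam (cell_indices a h N w i) (ly i)) n) <=
    exp (rsum (fun i => cell_mgf lam (ly i) - 1 - thr) n).
Proof using HF HPr HPZ HZmeas HZiid Hh.
  destruct (chernoff n lam ly thr) as [HE HP]. split; auto.
  eapply Rle_trans; [apply HP|]. rewrite <- rprod_exp. apply rprod_le. intros i _.
  assert (Hm : 0 <= cell_mgf lam (ly i)).
  { apply rsum_nonneg; intros; apply Rmult_le_pos;
      [apply (prob_nonneg HPZ), grid_int_borel | apply Rlt_le, exp_pos]. }
  split. apply Rmult_le_pos; auto. apply Rlt_le, exp_pos.
  replace (cell_mgf lam (ly i) - 1 - thr) with ((cell_mgf lam (ly i) - 1) + - thr) by ring.
  rewrite exp_plus. apply Rmult_le_compat_r. apply Rlt_le, exp_pos.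
  assert (H := exp_ineq1_le (cell_mgf lam (ly i) - 1)). lra.
Qed.

End Cylinder.

(** Events given by an open condition on [(Z_0, ..., Z_{n-1})] are measurable:
    such an event is the union, over finer and finer grids, of the cylinders
    whose cells lie inside the condition. *)
Lemma open_event_measurable n (O : (nat -> R) -> Prop) :
  (forall z, O z -> exists r, 0 < r /\
     forall z', (forall i, (i < n)%nat -> Rabs (z' i - z i) < r) -> O z') ->
  F (fun w => O (fun i => Z i w)).
Proof using HF HPr HZmeas HZiid.
  intros HO.
  (* The [M]-th grid covers [[-(M+1), M+1)] with mesh [1 / (M+1)]. *)
  set (orig := fun M : nat => - (INR M + 1)).
  set (mesh := fun M : nat => / (INR M + 1)).
  set (steps := fun M : nat => (2 * (M + 1) * (M + 1))%nat).
  assert (Hmesh : forall M, 0 < mesh M)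
    by (intros; unfold mesh; apply Rinv_0_lt_compat; assert (H := pos_INR M); lra).
  assert (Hend : forall M, orig M + INR (steps M) * mesh M = INR M + 1).
  { intros M; unfold orig, mesh, steps. rewrite !mult_INR, plus_INR. simpl INR.
    field. assert (H := pos_INR M); lra. }
  set (inside := fun M (s : nat -> nat) =>
    forall z', (forall i, (i < n)%nat -> grid_int (orig M) (mesh M) (steps M) (s i) (z' i)) -> O z').
  apply (sa_ext HF (fun w => exists M, inside M (cell_indices (orig M) (mesh M) (steps M) w))).
  - intros w; split.
    + intros [M HG]. apply HG. intros i Hi. apply grid_index_spec; auto.
    + intros Hw. destruct (HO _ Hw) as [r [Hr Hz]].
      destruct (nat_above (rsum (fun i => Rabs (Z i w)) n + / r)) as [M HM].
      assert (Hri : 0 < / r) by (apply Rinv_0_lt_compat; auto).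
      assert (Hsum : 0 <= rsum (fun i => Rabs (Z i w)) n) by (apply rsum_nonneg; intros; apply Rabs_pos).
      assert (HZb : forall i, (i < n)%nat -> Rabs (Z i w) < INR M + 1).
      { intros i Hi. assert (Rabs (Z i w) <= rsum (fun i => Rabs (Z i w)) n); [|lra].
        apply (rsum_term (fun i => Rabs (Z i w))); auto. intros; apply Rabs_pos. }
      assert (Hhr : mesh M < r).
      { unfold mesh. rewrite <- (Rinv_inv r). apply Rinv_lt_contravar; [|lra].
        apply Rmult_lt_0_compat; auto. assert (H := pos_INR M). lra. }
      exists M. intros z' Hz'. apply Hz. intros i Hi.
      assert (Hb := HZb i Hi). apply Rabs_def2 in Hb.
      rewrite Rabs_minus_sym.
      eapply Rlt_trans; [|exact Hhr].
      apply (grid_int_close (orig M) (mesh M) (steps M) (grid_index (orig M) (mesh M) (steps M) (Z i w))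
        (Z i w) (z' i) (Hmesh M));
        [unfold orig; lra | rewrite Hend; lra | apply grid_index_spec; auto | apply Hz'; auto].
  - apply sa_cup; auto. intros M.
    refine (proj1 (cylinder_prob (orig M) (mesh M) (steps M) (Hmesh M) n (inside M) _)).
    intros s s' Hss HG z' Hz'. apply HG. intros i Hi; rewrite Hss; auto.
Qed.

End IidCells.

(** ** Approximating Borel sets of R^2 by unions of grid cells *)

Definition cell_union (a b h : R) (N : nat) (U : nat -> nat -> Prop) (p : R * R) : Prop :=
  U (grid_index a h N (fst p)) (grid_index b h N (snd p)).

Definition symdiff {T} (A B : set T) (x : T) : Prop := (A x /\ ~ B x) \/ (B x /\ ~ A x).

Lemma cell_union_borel a b h N U : 0 < h -> borel2 (cell_union a b h N U).
Proof.
  intros Hh. assert (HS := borel_sa dist2).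
  apply (sa_ext HS (fun p => exists j, exists l, U j l /\ grid_cell a b h N j l p)).
  - intros p; unfold cell_union, grid_cell; split.
    + intros [j [l [Hu [H1 H2]]]].
      rewrite (grid_index_eq _ _ _ _ _ Hh H1), (grid_index_eq _ _ _ _ _ Hh H2); auto.
    + intros Hu. exists (grid_index a h N (fst p)), (grid_index b h N (snd p)).
      split; auto. split; apply grid_index_spec; auto.
  - apply sa_cup; auto; intros j. apply sa_cup; auto; intros l.
    apply sa_inter; auto. apply sa_const; auto. apply grid_cell_borel.
Qed.

Lemma symdiff_borel A B : borel2 A -> borel2 B -> borel2 (symdiff A B).
Proof. intros; assert (HS := borel_sa dist2). apply sa_union; auto; apply sa_diff; auto. Qed.

Fixpoint min_upto (f : nat -> R) (K : nat) : R :=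
  match K with O => 1 | S k => Rmin (min_upto f k) (f k) end.
Fixpoint max_upto (f : nat -> R) (K : nat) : R :=
  match K with O => 0 | S k => Rmax (max_upto f k) (f k) end.

Lemma min_upto_pos f K : (forall k, 0 < f k) -> 0 < min_upto f K.
Proof. intros H; induction K; simpl. lra. apply Rmin_glb_lt; auto. Qed.

Lemma min_upto_le f K k : (k < K)%nat -> min_upto f K <= f k.
Proof.
  induction K; intros Hk. lia. simpl. destruct (Nat.eq_dec k K). subst; apply Rmin_r.
  eapply Rle_trans. apply Rmin_l. apply IHK; lia.
Qed.

Lemma max_upto_ge f K k : (k < K)%nat -> f k <= max_upto f K.
Proof.
  induction K; intros Hk. lia. simpl. destruct (Nat.eq_dec k K). subst; apply Rmax_r.
  eapply Rle_trans. apply IHK; lia. apply Rmax_l.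
Qed.

Definition fine_grid (h0 L0 a b h : R) (N : nat) : Prop :=
  0 < h /\ h <= h0 /\ a <= - L0 /\ b <= - L0 /\ L0 <= a + INR N * h /\ L0 <= b + INR N * h.

Lemma fine_grid_mono h0 L0 h1 L1 a b h N : h0 <= h1 -> L1 <= L0 ->
  fine_grid h0 L0 a b h N -> fine_grid h1 L1 a b h N.
Proof. unfold fine_grid; intros; repeat split; lra. Qed.

(** Approximating a countable union by the union of the approximations of its
    first [K] members: the error set lies in the tail [Cup \ C_<K] or in one of
    the [K] error sets. *)
Lemma cup_error_bound mu (C : nat -> set (R * R)) K a b h N (Uf : nat -> nat -> nat -> Prop) :
  is_probability borel2 mu -> 0 < h -> (forall k, borel2 (C k)) ->
  mu (symdiff (fun x => exists k, C k x) (cell_union a b h N (fun j l => exists k, (k < K)%nat /\ Uf k j l)))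
  <= (mu (fun x => exists k, C k x) - mu (fun x => exists k, (k < K)%nat /\ C k x)) +
     rsum (fun k => mu (symdiff (C k) (cell_union a b h N (Uf k)))) K.
Proof.
  intros Hmu Hh HC. assert (HS := borel_sa dist2).
  set (Tk := fun k => symdiff (C k) (cell_union a b h N (Uf k))).
  assert (HTk : forall k, borel2 (Tk k)) by (intros; apply symdiff_borel; auto; apply cell_union_borel; auto).
  set (T0 := fun x => (exists k, C k x) /\ ~ exists k, (k < K)%nat /\ C k x).
  set (Tfin := fun x => exists k, (k < K)%nat /\ Tk k x).
  assert (HT0 : borel2 T0)
    by (apply (sa_diff HS); [apply (sa_cup HS) | apply (sa_fincup HS)]; intros; apply HC).
  assert (HTfin : borel2 Tfin) by (apply (sa_fincup HS); intros; apply HTk).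
  assert (Hincl : mu (symdiff (fun x => exists k, C k x)
      (cell_union a b h N (fun j l => exists k, (k < K)%nat /\ Uf k j l))) <= mu (fun x => T0 x \/ Tfin x)).
  { apply (prob_mono HS Hmu).
    - apply symdiff_borel; [apply (sa_cup HS); intros; apply HC | apply cell_union_borel; auto].
    - apply sa_union; auto.
    - intros x [[[k Hk] Hn]|[[k [Hk HU2]] Hn]].
      + destruct (classic (exists k, (k < K)%nat /\ C k x)) as [[k' [Hk' Hx']]|Hs].
        * right. exists k'. split; auto. left. split; auto. intros HU2; apply Hn. exists k'; auto.
        * left. split; eauto.
      + right. exists k. split; auto. right. split; auto. intros Hc; apply Hn; exists k; auto. }
  assert (E0 : mu T0 = mu (fun x => exists k, C k x) - mu (fun x => exists k, (k < K)%nat /\ C k x)).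
  { apply (prob_diff HS Hmu); [apply (sa_cup HS) | apply (sa_fincup HS) | intros x [k [_ Hk]]; exists k; auto];
      intros; apply HC. }
  assert (mu (fun x => T0 x \/ Tfin x) <= mu T0 + mu Tfin) by (apply (prob_sub2 HS Hmu); auto).
  assert (mu Tfin <= rsum (fun k => mu (Tk k)) K)
    by (unfold Tfin; apply (prob_finsub HS Hmu); intros; apply HTk).
  unfold Tk in *. lra.
Qed.

Section Approximation.
Context (P Q : set (R * R) -> R) (HP : is_probability borel2 P) (HQ : is_probability borel2 Q).

Definition approximable (C : set (R * R)) : Prop :=
  borel2 C /\ forall eta, 0 < eta -> exists h0 L0, 0 < h0 /\ forall a b h N, fine_grid h0 L0 a b h N ->
    exists U, P (symdiff C (cell_union a b h N U)) + Q (symdiff C (cell_union a b h N U)) < eta.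

Lemma approximable_T : approximable (fun _ => True).
Proof using HP HQ.
  split. apply sa_T, borel_sa. intros eta He. exists 1, 0. split. lra.
  intros a b h N Hg. exists (fun _ _ => True).
  rewrite (measure_ext P _ (fun _ => False)), (measure_ext Q _ (fun _ => False)).
  - rewrite (prob_empty (borel_sa dist2) HP), (prob_empty (borel_sa dist2) HQ). lra.
  - unfold symdiff, cell_union; intros; tauto.
  - unfold symdiff, cell_union; intros; tauto.
Qed.

Lemma approximable_compl C : approximable C -> approximable (fun x => ~ C x).
Proof.
  intros [HC H]. split. apply sa_compl; auto. apply borel_sa. intros eta He.
  destruct (H eta He) as [h0 [L0 [Hh0 H2]]]. exists h0, L0; split; auto. intros a b h N Hg.
  destruct (H2 a b h N Hg) as [U HU]. exists (fun j l => ~ U j l).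
  rewrite (measure_ext P _ (symdiff C (cell_union a b h N U))),
    (measure_ext Q _ (symdiff C (cell_union a b h N U))); auto;
    unfold symdiff, cell_union; intros; tauto.
Qed.

Lemma approximable_uniform (C : nat -> set (R * R)) K :
  (forall k, approximable (C k)) -> forall eta, 0 < eta ->
  exists h0 L0, 0 < h0 /\ forall a b h N, fine_grid h0 L0 a b h N ->
    exists Uf : nat -> nat -> nat -> Prop, forall k, (k < K)%nat ->
      P (symdiff (C k) (cell_union a b h N (Uf k))) + Q (symdiff (C k) (cell_union a b h N (Uf k))) < eta.
Proof.
  intros HA eta He.
  destruct (choice (fun k (hl : R * R) => 0 < fst hl /\ forall a b h N, fine_grid (fst hl) (snd hl) a b h N ->
    exists U, P (symdiff (C k) (cell_union a b h N U)) + Q (symdiff (C k) (cell_union a b h N U)) < eta))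
    as [hl Hhl].
  { intros k. destruct (proj2 (HA k) eta He) as [h0 [L0 [H1 H2]]]. exists (h0, L0); simpl; auto. }
  exists (min_upto (fun k => fst (hl k)) K), (max_upto (fun k => snd (hl k)) K). split.
  { apply min_upto_pos; intros; apply Hhl. }
  intros a b h N Hg.
  destruct (choice (fun k U => (k < K)%nat ->
    P (symdiff (C k) (cell_union a b h N U)) + Q (symdiff (C k) (cell_union a b h N U)) < eta))
    as [Uf HUf]; [|exists Uf; auto].
  intros k. destruct (Compare_dec.lt_dec k K) as [Hk|Hk].
  - destruct (proj2 (Hhl k) a b h N) as [U HU]; [|exists U; auto].
    eapply fine_grid_mono; [| |exact Hg].
    + apply (min_upto_le (fun k => fst (hl k))); auto.
    + apply (max_upto_ge (fun k => snd (hl k))); auto.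
  - exists (fun _ _ => True). intros; lia.
Qed.

(** Countable unions: by continuity, finitely many sets carry most of the mass,
    and these are approximated on a common grid. *)
Lemma approximable_cup (C : nat -> set (R * R)) :
  (forall k, approximable (C k)) -> approximable (fun x => exists k, C k x).
Proof using HP HQ.
  intros HA. assert (HS := borel_sa dist2). assert (HC : forall k, borel2 (C k)) by (intros; apply HA).
  set (Cup := fun x => exists k, C k x). assert (HCup : borel2 Cup) by (apply sa_cup; auto).
  split; auto. intros eta He.
  set (SK := fun K x => exists k, (k < K)%nat /\ C k x).
  assert (HSK : forall K, borel2 (SK K)) by (intros; apply sa_fincup; auto).
  assert (Hinc : forall K x, SK K x -> SK (S K) x) by (intros K x [k [Hk Hx]]; exists k; split; auto).
  assert (Hun : forall mu, is_probability borel2 mu -> Un_cv (fun K => mu (SK K)) (mu Cup)).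
  { intros mu Hmu. rewrite (measure_ext mu Cup (fun x => exists K, SK K x)).
    apply (prob_cont_below HS Hmu); auto.
    intros x; split. intros [k Hk]; exists (S k), k; split; auto. intros [K [k [_ Hk]]]; exists k; auto. }
  destruct (Hun P HP (eta / 3)) as [K1 HK1]. lra. destruct (Hun Q HQ (eta / 3)) as [K2 HK2]. lra.
  set (K := max K1 K2).
  assert (HK1' := HK1 K ltac:(lia)). assert (HK2' := HK2 K ltac:(lia)).
  unfold R_dist in HK1', HK2'. apply Rabs_def2 in HK1'. apply Rabs_def2 in HK2'.
  set (eta' := eta / 3 / (INR K + 1)).
  assert (He' : 0 < eta') by (unfold eta'; apply Rdiv_lt_0_compat; [lra|assert (H := pos_INR K); lra]).
  destruct (approximable_uniform C K HA eta' He') as [h0 [L0 [Hh0 HU]]].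
  exists h0, L0. split; auto. intros a b h N Hg. assert (Hh : 0 < h) by apply Hg.
  destruct (HU a b h N Hg) as [Uf HUf].
  exists (fun j l => exists k, (k < K)%nat /\ Uf k j l).
  set (Tk := fun k => symdiff (C k) (cell_union a b h N (Uf k))).
  assert (Hbd : forall mu, is_probability borel2 mu ->
    mu (symdiff Cup (cell_union a b h N (fun j l => exists k, (k < K)%nat /\ Uf k j l)))
      <= (mu Cup - mu (SK K)) + rsum (fun k => mu (Tk k)) K)
    by (intros mu Hmu; apply cup_error_bound; auto).
  assert (Hsum : rsum (fun k => P (Tk k)) K + rsum (fun k => Q (Tk k)) K <= INR K * eta').
  { rewrite <- rsum_plus, <- rsum_const. apply rsum_le. intros k Hk. apply Rlt_le. apply HUf; auto. }
  assert (INR K * eta' < eta / 3) by (apply shares_below; lra).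
  assert (H1 := Hbd P HP). assert (H2 := Hbd Q HQ). lra.
Qed.

Definition inner_part (U : set (R * R)) (m : nat) (p : R * R) : Prop :=
  (forall q, dist2 p q < / (INR m + 1) -> U q) /\
  (- INR m <= fst p /\ fst p < INR m) /\ (- INR m <= snd p /\ snd p < INR m).

Lemma inner_part_borel U m : borel2 (inner_part U m).
Proof.
  assert (HS := borel_sa dist2). unfold inner_part. apply sa_inter; auto.
  - apply (sa_ext HS (fun p => ~ enlarge dist2 (fun q => ~ U q) (/ (INR m + 1)) p)).
    + intros p; split.
      * intros Hn q Hq. apply NNPP; intros Hu; apply Hn; exists q; auto.
      * intros H [q [Hq1 Hq2]]. auto.
    + apply sa_compl; auto. apply enlarge_borel2.
  - exact (borel2_rect (fun x => - INR m <= x /\ x < INR m) (fun x => - INR m <= x /\ x < INR m)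
      (borel1_ico _ _) (borel1_ico _ _)).
Qed.

Lemma inner_part_incr U m p : inner_part U m p -> inner_part U (S m) p.
Proof.
  intros [H1 [H2 H3]]. assert (/ (INR (S m) + 1) <= / (INR m + 1)).
  { rewrite S_INR. apply Rinv_le_contravar. assert (H := pos_INR m); lra. lra. }
  unfold inner_part. rewrite S_INR in *. split. intros q Hq; apply H1; lra. lra.
Qed.

Lemma inner_part_union U : metric_open dist2 U -> forall p, U p <-> exists m, inner_part U m p.
Proof.
  intros HU p; split.
  - intros Hp. destruct (HU p Hp) as [r [Hr Hr2]].
    destruct (nat_above (Rabs (fst p) + Rabs (snd p) + / r)) as [m Hm].
    assert (0 < / r) by (apply Rinv_0_lt_compat; auto).
    assert (A1 := Rabs_pos (fst p)). assert (A2 := Rabs_pos (snd p)).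
    exists m. split.
    + intros q Hq. apply Hr2. assert (/ (INR m + 1) < r); [|lra].
      rewrite <- (Rinv_inv r). apply Rinv_lt_contravar. apply Rmult_lt_0_compat; lra. lra.
    + split; split; unfold Rabs in *; repeat destruct Rcase_abs; lra.
  - intros [m [H1 _]]. apply H1. unfold dist2.
    replace ((fst p - fst p) ^ 2 + (snd p - snd p) ^ 2) with 0 by ring. rewrite sqrt_0.
    apply Rinv_0_lt_compat. assert (H := pos_INR m); lra.
Qed.

(** Open sets: the cells contained in [U] cover the inner part of [U] once the
    mesh is below half its margin. *)
Lemma approximable_open U : metric_open dist2 U -> approximable U.
Proof using HP HQ.
  intros HU. assert (HS := borel_sa dist2). assert (HUb : borel2 U) by (apply open_borel; auto).
  split; auto. intros eta He.
  assert (Hcv : forall mu, is_probability borel2 mu -> Un_cv (fun m => mu (inner_part U m)) (mu U)).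
  { intros mu Hmu. rewrite (measure_ext mu U _ (inner_part_union U HU)).
    apply (prob_cont_below HS Hmu). apply inner_part_borel. apply inner_part_incr. }
  destruct (Hcv P HP (eta / 2)) as [M1 HM1]. lra. destruct (Hcv Q HQ (eta / 2)) as [M2 HM2]. lra.
  set (m := max M1 M2). assert (HM1' := HM1 m ltac:(lia)). assert (HM2' := HM2 m ltac:(lia)).
  unfold R_dist in *. apply Rabs_def2 in HM1'. apply Rabs_def2 in HM2'.
  assert (Hrho : 0 < / (INR m + 1)) by (apply Rinv_0_lt_compat; assert (H := pos_INR m); lra).
  exists (/ (INR m + 1) / 2), (INR m). split. lra.
  intros a b h N [Hh [Hh0 [Ha [Hb [Ha2 Hb2]]]]].
  set (Uc := fun j l => forall q, grid_int a h N j (fst q) -> grid_int b h N l (snd q) -> U q).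
  exists Uc.
  (* The error set lies in [U] minus its inner part. *)
  assert (Hsub : forall p, symdiff U (cell_union a b h N Uc) p -> U p /\ ~ inner_part U m p).
  { intros p [[Hp Hn]|[Hc Hn]].
    - split; auto. intros [Hv1 [Hv2 Hv3]]. apply Hn. unfold cell_union, Uc. intros q Hq1 Hq2. apply Hv1.
      assert (E1 := grid_int_close a h N _ (fst p) (fst q) Hh ltac:(lra) ltac:(lra)
        (grid_index_spec _ _ _ _ Hh) Hq1).
      assert (E2 := grid_int_close b h N _ (snd p) (snd q) Hh ltac:(lra) ltac:(lra)
        (grid_index_spec _ _ _ _ Hh) Hq2).
      assert (E3 := dist2_le_sum p q). lra.
    - exfalso. apply Hn. apply Hc; apply grid_index_spec; auto. }
  assert (Hbd : forall mu, is_probability borel2 mu ->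
    mu (symdiff U (cell_union a b h N Uc)) <= mu U - mu (inner_part U m)).
  { intros mu Hmu. rewrite <- (prob_diff HS Hmu U (inner_part U m) HUb (inner_part_borel U m)).
    - apply (prob_mono HS Hmu); auto.
      + apply symdiff_borel; auto. apply cell_union_borel; auto.
      + apply (sa_diff HS _ _ HUb (inner_part_borel U m)).
    - intros p Hp. apply (inner_part_union U HU). eauto. }
  assert (H1 := Hbd P HP). assert (H2 := Hbd Q HQ). lra.
Qed.

Lemma approximable_borel C : borel2 C -> approximable C.
Proof using HP HQ.
  apply (borel_ind dist2 approximable).
  - split; [|split]. apply approximable_T. apply approximable_compl. apply approximable_cup.
  - apply approximable_open.
Qed.

End Approximation.

Definition part_cell {T} (parts : list (set T)) (k : nat) : set T := nth k parts (fun _ => False).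

Definition mislabeled (parts : list (set (R * R))) a b h N (kap : nat -> nat -> nat) (p : R * R) : Prop :=
  ~ part_cell parts (kap (grid_index a h N (fst p)) (grid_index b h N (snd p))) p.

Section Partition.
Context {T : Type} (M : set T -> Prop) (HM : is_sigma_algebra M).

Lemma part_cell_meas parts k : is_partition M parts -> M (part_cell parts k).
Proof using HM.
  intros [H _]. unfold part_cell. destruct (Compare_dec.lt_dec k (length parts)).
  - apply H, nth_In; auto.
  - rewrite nth_overflow by lia. apply sa_empty; auto.
Qed.

Lemma part_cell_disj parts i j x : is_partition M parts ->
  (i < length parts)%nat -> (j < length parts)%nat -> part_cell parts i x -> part_cell parts j x -> i = j.
Proof. intros [_ [_ H]] Hi Hj H1 H2. destruct (Nat.eq_dec i j); auto. exfalso; eapply H; eauto. Qed.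

Lemma partition_additivity mu parts A : is_probability M mu -> is_partition M parts -> M A ->
  mu A = rsum (fun k => mu (fun p => A p /\ part_cell parts k p)) (length parts).
Proof using HM.
  intros Hmu Hp HA. apply (prob_partition_sum HM Hmu); auto.
  - intros; apply part_cell_meas; auto.
  - intros; apply Hp.
  - intros; eapply part_cell_disj; eauto.
Qed.

Lemma partition_total mu parts : is_probability M mu -> is_partition M parts ->
  rsum (fun k => mu (part_cell parts k)) (length parts) = 1.
Proof using HM.
  intros Hmu Hp. rewrite <- (prob_T Hmu), (partition_additivity mu parts (fun _ => True)); auto.
  - apply rsum_ext; intros; apply measure_ext; tauto.
  - apply sa_T; auto.
Qed.

End Partition.
Arguments part_cell_meas {T M} HM.
Arguments part_cell_disj {T M}.
Arguments partition_additivity {T M} HM.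
Arguments partition_total {T M} HM.

Lemma partition_div_rsum {T} (P Q : set T -> R) parts :
  partition_div P Q parts = rsum (fun k => div_term (P (part_cell parts k)) (Q (part_cell parts k))) (length parts).
Proof.
  induction parts. reflexivity. simpl length. rewrite rsum_shift. simpl. rewrite IHparts. reflexivity.
Qed.

Lemma mislabeled_borel parts a b h N kap : 0 < h -> is_partition borel2 parts ->
  borel2 (mislabeled parts a b h N kap).
Proof.
  intros Hh Hp. assert (HS := borel_sa dist2).
  apply (sa_ext HS (fun p => exists j, exists l, grid_cell a b h N j l p /\ ~ part_cell parts (kap j l) p)).
  - intros p; unfold mislabeled, grid_cell; split.
    + intros [j [l [[H1 H2] H3]]].
      rewrite (grid_index_eq _ _ _ _ _ Hh H1), (grid_index_eq _ _ _ _ _ Hh H2); auto.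
    + intros H. exists (grid_index a h N (fst p)), (grid_index b h N (snd p)).
      split; auto. split; apply grid_index_spec; auto.
  - apply sa_cup; auto; intros j. apply sa_cup; auto; intros l.
    apply sa_diff; auto. apply grid_cell_borel. apply (part_cell_meas HS); auto.
Qed.

Lemma exists_labeling (Uf : nat -> nat -> nat -> Prop) K : (0 < K)%nat ->
  exists kap : nat -> nat -> nat, forall j l,
    (kap j l < K)%nat /\ (forall k, (k < K)%nat -> Uf k j l -> Uf (kap j l) j l).
Proof.
  intros HK.
  assert (Hlabel : forall jl : nat * nat, exists k, (k < K)%nat /\
    (forall k', (k' < K)%nat -> Uf k' (fst jl) (snd jl) -> Uf k (fst jl) (snd jl))).
  { intros [j l]; simpl. destruct (classic (exists k, (k < K)%nat /\ Uf k j l)) as [[k [Hk Hu]]|Hn].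
    - exists k; split; auto.
    - exists O; split; auto. intros k' Hk' Hu; exfalso; eauto. }
  destruct (choice _ Hlabel) as [lab Hlab]. exists (fun j l => lab (j, l)).
  intros j l; apply (Hlab (j, l)).
Qed.

Lemma mislabeled_in_errors parts a b h N kap (Uf : nat -> nat -> nat -> Prop) p :
  is_partition borel2 parts ->
  (forall j l, (kap j l < length parts)%nat /\
     (forall k, (k < length parts)%nat -> Uf k j l -> Uf (kap j l) j l)) ->
  mislabeled parts a b h N kap p ->
  exists k, (k < length parts)%nat /\ symdiff (part_cell parts k) (cell_union a b h N (Uf k)) p.
Proof.
  intros [_ [Hc _]] Hkap Hb. destruct (Hc p) as [k0 [Hk0 Hp0]].
  set (j := grid_index a h N (fst p)) in *. set (l := grid_index b h N (snd p)) in *.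
  destruct (classic (Uf k0 j l)) as [Hu|Hu].
  - exists (kap j l). split. apply Hkap. right. split; auto. apply (proj2 (Hkap j l) k0); auto.
  - exists k0. split; auto. left. split; auto.
Qed.

Lemma partition_labeling (P Q : set (R * R) -> R) parts :
  is_probability borel2 P -> is_probability borel2 Q -> is_partition borel2 parts ->
  forall eta, 0 < eta ->
  exists h0 L0, 0 < h0 /\ forall a b h N, fine_grid h0 L0 a b h N -> exists kap : nat -> nat -> nat,
    (forall j l, (kap j l < length parts)%nat) /\
    P (mislabeled parts a b h N kap) + Q (mislabeled parts a b h N kap) < eta.
Proof.
  intros HP HQ Hp eta He. assert (HS := borel_sa dist2). set (K := length parts).
  assert (HK : (0 < K)%nat) by (destruct Hp as [_ [Hc _]]; destruct (Hc (0, 0)) as [i [Hi _]]; unfold K; lia).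
  set (eta' := eta / (INR K + 1)).
  assert (He' : 0 < eta') by (unfold eta'; apply Rdiv_lt_0_compat; [lra|assert (H := pos_INR K); lra]).
  destruct (approximable_uniform P Q (part_cell parts) K
    (fun k => approximable_borel P Q HP HQ _ (part_cell_meas HS parts k Hp)) eta' He')
    as [h0 [L0 [Hh0 HA]]].
  exists h0, L0. split; auto. intros a b h N Hg. destruct (HA a b h N Hg) as [Uf HUf].
  assert (Hh : 0 < h) by apply Hg.
  destruct (exists_labeling Uf K HK) as [kap Hkap].
  exists kap. split; [intros; apply Hkap|].
  set (Tk := fun k => symdiff (part_cell parts k) (cell_union a b h N (Uf k))).
  assert (HTk : forall k, borel2 (Tk k))
    by (intros; apply symdiff_borel; [apply (part_cell_meas HS); auto|apply cell_union_borel; auto]).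
  assert (Hbd : forall mu, is_probability borel2 mu ->
    mu (mislabeled parts a b h N kap) <= rsum (fun k => mu (Tk k)) K).
  { intros mu Hmu. eapply Rle_trans; [|apply (prob_finsub HS Hmu); intros; apply HTk].
    apply (prob_mono HS Hmu); [apply mislabeled_borel; auto | apply (sa_fincup HS); intros; apply HTk |].
    intros p; apply mislabeled_in_errors; auto. }
  assert (rsum (fun k => P (Tk k)) K + rsum (fun k => Q (Tk k)) K <= INR K * eta').
  { rewrite <- rsum_plus, <- rsum_const. apply rsum_le. intros k Hk. apply Rlt_le. apply HUf; auto. }
  assert (INR K * eta' < eta) by (apply shares_below; auto).
  assert (H1 := Hbd P HP). assert (H2 := Hbd Q HQ). lra.
Qed.

Lemma grid_additivity mu a b h N A : is_probability borel2 mu -> 0 < h -> borel2 A ->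
  mu A = rsum (fun j => rsum (fun l => mu (fun p => A p /\ grid_cell a b h N j l p)) (S (S N))) (S (S N)).
Proof.
  intros Hmu Hh HSb. assert (HS := borel_sa dist2).
  rewrite (prob_partition_sum HS Hmu (fun j p => grid_int a h N j (fst p)) (S (S N)) A);
    [| intros; apply borel2_fst, grid_int_borel | intros; apply grid_int_cover; auto
     | intros ? ? ? _ _ H1 H2; exact (grid_int_unique _ _ _ _ _ _ Hh H1 H2) | exact HSb].
  apply rsum_ext. intros j Hj.
  rewrite (prob_partition_sum HS Hmu (fun l p => grid_int b h N l (snd p)) (S (S N)));
    [| intros; apply borel2_snd, grid_int_borel | intros; apply grid_int_cover; auto
     | intros ? ? ? _ _ H1 H2; exact (grid_int_unique _ _ _ _ _ _ Hh H1 H2)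
     | apply sa_inter; auto; apply borel2_fst, grid_int_borel].
  apply rsum_ext. intros l Hl. apply measure_ext. unfold grid_cell. intros p; tauto.
Qed.

Lemma relabel_term_bound mu parts a b h N kap (g : nat -> R) G0 j l k :
  is_probability borel2 mu -> is_partition borel2 parts -> 0 < h ->
  (forall j l, (kap j l < length parts)%nat) -> (forall k, (k < length parts)%nat -> Rabs (g k) <= G0) ->
  (k < length parts)%nat ->
  Rabs ((g (kap j l) - g k) * mu (fun p => grid_cell a b h N j l p /\ part_cell parts k p)) <=
  2 * G0 * mu (fun p => (mislabeled parts a b h N kap p /\ grid_cell a b h N j l p) /\ part_cell parts k p).
Proof.
  intros Hmu Hp Hh Hk Hg Hkk. assert (HS := borel_sa dist2).
  assert (HG0 : 0 <= G0) by (eapply Rle_trans; [apply Rabs_pos | apply (Hg (kap j l)); auto]).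
  assert (Hm : 0 <= mu (fun p => (mislabeled parts a b h N kap p /\ grid_cell a b h N j l p) /\ part_cell parts k p)).
  { apply (prob_nonneg Hmu). apply sa_inter; auto; [apply sa_inter; auto | apply (part_cell_meas HS); auto].
    apply mislabeled_borel; auto. apply grid_cell_borel. }
  destruct (Nat.eq_dec k (kap j l)) as [->|Hne].
  - rewrite Rminus_diag, Rmult_0_l, Rabs_R0. apply Rmult_le_pos; lra.
  - rewrite (measure_ext mu _ (fun p => (mislabeled parts a b h N kap p /\ grid_cell a b h N j l p) /\ part_cell parts k p)).
    + rewrite Rabs_mult, (Rabs_right (mu _)) by lra. apply Rmult_le_compat_r; auto.
      eapply Rle_trans. apply Rabs_triang. rewrite Rabs_Ropp.
      assert (Rabs (g (kap j l)) <= G0) by auto. assert (Rabs (g k) <= G0) by auto. lra.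
    + intros p; split; [|tauto]. intros [Hc Hcn]. split; auto. split; auto.
      unfold mislabeled. destruct Hc as [Hc1 Hc2].
      rewrite (grid_index_eq _ _ _ _ _ Hh Hc1), (grid_index_eq _ _ _ _ _ Hh Hc2).
      intros Hk2. apply Hne. eapply part_cell_disj; eauto.
Qed.

Lemma relabel_error mu parts a b h N kap (g : nat -> R) G0 :
  is_probability borel2 mu -> is_partition borel2 parts -> 0 < h ->
  (forall j l, (kap j l < length parts)%nat) -> (forall k, (k < length parts)%nat -> Rabs (g k) <= G0) ->
  Rabs (rsum (fun j => rsum (fun l => g (kap j l) * mu (grid_cell a b h N j l)) (S (S N))) (S (S N)) -
        rsum (fun k => g k * mu (part_cell parts k)) (length parts)) <= 2 * G0 * mu (mislabeled parts a b h N kap).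
Proof.
  intros Hmu Hp Hh Hk Hg. assert (HS := borel_sa dist2). set (K := length parts). set (G := S (S N)).
  set (Bad := mislabeled parts a b h N kap). assert (HB : borel2 Bad) by (apply mislabeled_borel; auto).
  set (T := fun j l k => mu (fun p => grid_cell a b h N j l p /\ part_cell parts k p)).
  assert (E1 : forall j l, mu (grid_cell a b h N j l) = rsum (fun k => T j l k) K).
  { intros; apply (partition_additivity HS); auto. apply grid_cell_borel. }
  assert (E2 : forall k, mu (part_cell parts k) = rsum (fun j => rsum (fun l => T j l k) G) G).
  { intros k. rewrite (grid_additivity mu a b h N); auto. apply rsum_ext; intros; apply rsum_ext; intros.
    unfold T; apply measure_ext; tauto. apply (part_cell_meas HS); auto. }
  assert (E3 : mu Bad = rsum (fun j => rsum (fun l =>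
      rsum (fun k => mu (fun p => (Bad p /\ grid_cell a b h N j l p) /\ part_cell parts k p)) K) G) G).
  { rewrite (grid_additivity mu a b h N); auto. apply rsum_ext; intros; apply rsum_ext; intros.
    apply (partition_additivity HS); auto. apply sa_inter; auto. apply grid_cell_borel. }
  (* Both sums expand over (cell, piece) pairs; only mislabelled pairs differ. *)
  assert (LHS : rsum (fun j => rsum (fun l => g (kap j l) * mu (grid_cell a b h N j l)) G) G -
      rsum (fun k => g k * mu (part_cell parts k)) K =
      rsum (fun j => rsum (fun l => rsum (fun k => (g (kap j l) - g k) * T j l k) K) G) G).
  { assert (rsum (fun k => g k * mu (part_cell parts k)) K =
      rsum (fun j => rsum (fun l => rsum (fun k => g k * T j l k) K) G) G).
    { rewrite (rsum_ext _ (fun k => rsum (fun j => rsum (fun l => g k * T j l k) G) G)).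
      - rewrite rsum_swap. apply rsum_ext; intros. rewrite rsum_swap. auto.
      - intros k _. rewrite E2, <- rsum_scal. apply rsum_ext; intros. rewrite <- rsum_scal; auto. }
    rewrite H, <- rsum_minus. apply rsum_ext; intros j _. rewrite <- rsum_minus. apply rsum_ext; intros l _.
    rewrite E1, <- rsum_scal, <- rsum_minus. apply rsum_ext; intros; ring. }
  rewrite LHS, E3, <- rsum_scal.
  eapply Rle_trans. apply rsum_abs. apply rsum_le. intros j Hj.
  rewrite <- rsum_scal. eapply Rle_trans. apply rsum_abs. apply rsum_le. intros l Hl.
  rewrite <- rsum_scal. eapply Rle_trans. apply rsum_abs. apply rsum_le. intros k Hkk.
  apply relabel_term_bound; auto.
Qed.

(** ** Grids whose lines carry little mass *)

Lemma Zabs_lt1 (z : Z) : Rabs (IZR z) < 1 -> z = 0%Z.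
Proof.
  intros H. apply Rabs_def2 in H. destruct H as [H1 H2].
  assert (z < 1)%Z by (apply lt_IZR; auto). assert (-1 < z)%Z by (apply lt_IZR; simpl; lra). lia.
Qed.

Lemma offset_strips_disjoint a0 h N (M : nat) i j x : 0 < h -> (i < M)%nat -> (j < M)%nat -> (i < j)%nat ->
  near_grid (a0 + INR i * h / INR M) h N (h / (3 * INR M)) x ->
  near_grid (a0 + INR j * h / INR M) h N (h / (3 * INR M)) x -> False.
Proof.
  intros Hh Hi Hj Hij [ji [Hji Hx1]] [jj [Hjj Hx2]].
  assert (HMp : 0 < INR M) by (apply lt_0_INR; lia). set (w := h / (3 * INR M)) in *.
  (* The two grid points would differ by [h ((i - j) / M + (ji - jj))], of size below [h / M]. *)
  set (z := ((Z.of_nat i - Z.of_nat j) + (Z.of_nat ji - Z.of_nat jj) * Z.of_nat M)%Z).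
  assert (Hz : IZR z = (INR i - INR j) + (INR ji - INR jj) * INR M).
  { unfold z. rewrite plus_IZR, mult_IZR, !minus_IZR, <- !INR_IZR_INZ. ring. }
  assert (Habs : Rabs (IZR z) < 1).
  { rewrite Hz.
    replace ((INR i - INR j) + (INR ji - INR jj) * INR M) with
      (((x - (a0 + INR j * h / INR M + INR jj * h)) - (x - (a0 + INR i * h / INR M + INR ji * h)))
        * (INR M / h)) by (field; lra).
    assert (HMh : 0 < INR M / h) by (apply Rdiv_lt_0_compat; auto).
    rewrite Rabs_mult, (Rabs_right (INR M / h)) by lra.
    assert (Rabs ((x - (a0 + INR j * h / INR M + INR jj * h)) - (x - (a0 + INR i * h / INR M + INR ji * h)))
      < 2 * w).
    { eapply Rle_lt_trans. apply Rabs_triang. rewrite Rabs_Ropp.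
      lra. }
    assert (2 * w * (INR M / h) < 1) by (unfold w; field_simplify; lra).
    nra. }
  apply Zabs_lt1 in Habs. unfold z in Habs. clear z Hz.
  destruct (Nat.lt_trichotomy ji jj) as [Hl|[Hl|Hl]].
  - assert ((Z.of_nat jj - Z.of_nat ji) * Z.of_nat M >= Z.of_nat M)%Z by nia. lia.
  - subst. lia.
  - assert ((Z.of_nat ji - Z.of_nat jj) * Z.of_nat M >= Z.of_nat M)%Z by nia. lia.
Qed.

Lemma offset_thin_strip (mu : set R -> R) a0 h N (M : nat) :
  is_probability borel1 mu -> 0 < h -> (1 <= M)%nat ->
  exists m, (m < M)%nat /\ mu (near_grid (a0 + INR m * h / INR M) h N (h / (3 * INR M))) <= / INR M.
Proof.
  intros Hmu Hh HM. assert (HS := borel_sa dist1). assert (HMp : 0 < INR M) by (apply lt_0_INR; lia).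
  set (Sm := fun m => near_grid (a0 + INR m * h / INR M) h N (h / (3 * INR M))).
  assert (HSb : forall m, borel1 (Sm m)) by (intros; apply near_grid_borel).
  apply NNPP; intros Hn.
  assert (Hall : forall m, (m < M)%nat -> / INR M < mu (Sm m)).
  { intros m Hm. apply Rnot_le_lt. intros Hle. apply Hn. exists m; split; auto. }
  assert (Hsum : rsum (fun m => mu (Sm m)) M <= 1).
  { rewrite <- (prob_finadd HS Hmu Sm M).
    - apply (prob_le1 HS Hmu). apply (sa_fincup HS); intros; apply HSb.
    - intros; apply HSb.
    - intros i j x Hi Hj Hij H1 H2. destruct (Nat.lt_ge_cases i j).
      + apply (offset_strips_disjoint a0 h N M i j x); auto.
      + apply (offset_strips_disjoint a0 h N M j i x); auto. lia. }
  assert (rsum (fun _ => / INR M) M < rsum (fun m => mu (Sm m)) M) by (apply rsum_lt; auto).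
  rewrite rsum_const, Rinv_r in H by lra. lra.
Qed.

Lemma offset_grid_fine h L0 N (M : nat) ma mb : 0 < h -> (1 <= M)%nat -> (ma < M)%nat -> (mb < M)%nat ->
  2 * Rabs L0 + 2 * h < INR N * h ->
  fine_grid h L0 (- Rabs L0 - h + INR ma * h / INR M) (- Rabs L0 - h + INR mb * h / INR M) h N.
Proof.
  intros Hh HM Hma Hmb HN. assert (HMp : 0 < INR M) by (apply lt_0_INR; lia).
  assert (Hshift : forall m, (m < M)%nat -> 0 <= INR m * h / INR M < h).
  { intros m Hm. assert (INR m < INR M) by (apply lt_INR; auto). assert (0 <= INR m) by apply pos_INR.
    split.
    - apply Rmult_le_pos; [apply Rmult_le_pos; lra|apply Rlt_le, Rinv_0_lt_compat; lra].
    - apply (Rmult_lt_reg_r (INR M)); auto. unfold Rdiv. rewrite Rmult_assoc, Rinv_l by lra. nra. }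
  assert (HL := Rle_abs L0). assert (HL' := Rle_abs (- L0)). rewrite Rabs_Ropp in HL'.
  destruct (Hshift ma Hma). destruct (Hshift mb Hmb). unfold fine_grid. repeat split; lra.
Qed.

Lemma grid_labeling (P Q : set (R * R) -> R) parts :
  is_probability borel2 P -> is_probability borel2 Q -> is_partition borel2 parts ->
  forall eta c, 0 < eta -> 0 < c ->
  exists a b h N kap w, 0 < h /\ 0 < w /\ (forall j l, (kap j l < length parts)%nat) /\
    P (mislabeled parts a b h N kap) + Q (mislabeled parts a b h N kap) < eta /\
    INR (S (S N)) * INR (S (S N)) * P (grid_strip a b h N w) <= c.
Proof.
  intros HP HQ Hp eta c He Hc.
  destruct (partition_labeling P Q parts HP HQ Hp eta He) as [h [L0 [Hh Hlab]]].
  destruct (nat_above ((2 * Rabs L0 + 2 * h) / h)) as [N HN].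
  assert (HNh : 2 * Rabs L0 + 2 * h < INR N * h).
  { apply (Rmult_lt_compat_r h) in HN; auto. unfold Rdiv in HN. rewrite Rmult_assoc, Rinv_l in HN; lra. }
  set (GG := INR (S (S N)) * INR (S (S N))).
  assert (HGG : 0 < GG) by (unfold GG; apply Rmult_lt_0_compat; apply lt_0_INR; lia).
  destruct (nat_above (2 * GG / c)) as [M0 HM0]. set (M := S M0).
  assert (HM : (1 <= M)%nat) by (unfold M; lia). assert (HMp : 0 < INR M) by (apply lt_0_INR; lia).
  assert (HMc : 2 * GG / INR M <= c).
  { assert (INR M0 < INR M) by (unfold M; rewrite S_INR; lra).
    assert (2 * GG < c * INR M).
    { apply (Rmult_lt_compat_r c) in HM0; auto. unfold Rdiv in HM0. rewrite Rmult_assoc, Rinv_l in HM0; nra. }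
    apply (Rmult_le_reg_r (INR M)); auto. unfold Rdiv. rewrite Rmult_assoc, Rinv_l by lra. nra. }
  set (a0 := - Rabs L0 - h).
  destruct (offset_thin_strip _ a0 h N M (marginal_prob P fst dist2_fst HP) Hh HM) as [ma [Hma Hsa]].
  destruct (offset_thin_strip _ a0 h N M (marginal_prob P snd dist2_snd HP) Hh HM) as [mb [Hmb Hsb]].
  set (a := a0 + INR ma * h / INR M). set (b := a0 + INR mb * h / INR M). set (w := h / (3 * INR M)).
  destruct (Hlab a b h N (offset_grid_fine h L0 N M ma mb Hh HM Hma Hmb HNh)) as [kap [Hkap HBad]].
  exists a, b, h, N, kap, w. repeat split; auto.
  - unfold w; apply Rdiv_lt_0_compat; lra.
  - assert (Hstrip : P (grid_strip a b h N w) <= 2 / INR M).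
    { unfold grid_strip. eapply Rle_trans. apply (prob_sub2 (borel_sa dist2) HP).
      apply borel2_fst, near_grid_borel. apply borel2_snd, near_grid_borel.
      cbv beta in Hsa, Hsb. fold a b w in Hsa, Hsb. unfold Rdiv in *. lra. }
    fold GG. apply (Rmult_le_compat_l GG) in Hstrip; [|lra].
    replace (GG * (2 / INR M)) with (2 * GG / INR M) in Hstrip by (field; lra). lra.
Qed.

Lemma cell_sum_point a b h N (f : nat -> nat -> R) u v : 0 < h ->
  rsum (fun j => rsum (fun l => f j l * ind (grid_cell a b h N j l) (u, v)) (S (S N))) (S (S N)) =
  f (grid_index a h N u) (grid_index b h N v).
Proof.
  intros Hh. assert (Hx := grid_index_spec a h N u Hh). assert (Hy := grid_index_spec b h N v Hh).
  rewrite (rsum_single _ _ (grid_index a h N u)); [| eapply grid_int_range; eauto |].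
  - rewrite (rsum_single _ _ (grid_index b h N v)); [| eapply grid_int_range; eauto |].
    + rewrite ind_true. ring. split; auto.
    + intros l _ Hl. rewrite ind_false. ring. intros [_ H2]. apply Hl. symmetry; apply grid_index_eq; auto.
  - intros j _ Hj. rewrite (rsum_ext _ (fun _ => 0)). rewrite rsum_const; ring.
    intros l _. rewrite ind_false. ring. intros [H1 _]. apply Hj. symmetry; apply grid_index_eq; auto.
Qed.

Lemma sum_by_cells a b h N n (x y : nat -> R) (f : nat -> nat -> R) : 0 < h -> (1 <= n)%nat ->
  rsum (fun i => f (grid_index a h N (x i)) (grid_index b h N (y i))) n =
  INR n * rsum (fun j => rsum (fun l =>
    f j l * empirical n (fun i => (x i, y i)) (grid_cell a b h N j l)) (S (S N))) (S (S N)).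
Proof.
  intros Hh Hn. unfold empirical. set (G := S (S N)).
  assert (E : rsum (fun j => rsum (fun l =>
      f j l * (/ INR n * rsum (fun i => ind (grid_cell a b h N j l) (x i, y i)) n)) G) G
    = / INR n * rsum (fun i => rsum (fun j => rsum (fun l =>
      f j l * ind (grid_cell a b h N j l) (x i, y i)) G) G) n).
  { transitivity (rsum (fun j => rsum (fun i =>
      / INR n * rsum (fun l => f j l * ind (grid_cell a b h N j l) (x i, y i)) G) n) G).
    - apply rsum_ext; intros j _.
      transitivity (rsum (fun l => rsum (fun i =>
        / INR n * (f j l * ind (grid_cell a b h N j l) (x i, y i))) n) G).
      + apply rsum_ext; intros l _. rewrite rsum_scal, rsum_scal. ring.
      + rewrite rsum_swap. apply rsum_ext; intros i _. rewrite <- rsum_scal. auto.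
    - rewrite rsum_swap, <- rsum_scal. apply rsum_ext; intros i _. rewrite <- rsum_scal. auto. }
  rewrite E, <- Rmult_assoc, Rinv_r, Rmult_1_l by (apply not_0_INR; lia).
  apply rsum_ext. intros i _. rewrite cell_sum_point; auto.
Qed.

Lemma double_sum_perturb (f p q : nat -> nat -> R) G Fb tau :
  (forall j l, (j < G)%nat -> (l < G)%nat -> Rabs (f j l) <= Fb /\ Rabs (q j l - p j l) <= tau) ->
  Rabs (rsum (fun j => rsum (fun l => f j l * q j l) G) G - rsum (fun j => rsum (fun l => f j l * p j l) G) G)
  <= INR G * INR G * (Fb * tau).
Proof.
  intros H. rewrite <- rsum_minus. eapply Rle_trans. apply rsum_abs.
  rewrite Rmult_assoc, <- rsum_const. apply rsum_le. intros j Hj.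
  rewrite <- rsum_minus. eapply Rle_trans. apply rsum_abs. rewrite <- rsum_const. apply rsum_le. intros l Hl.
  destruct (H j l Hj Hl) as [H1 H2].
  replace (f j l * q j l - f j l * p j l) with (f j l * (q j l - p j l)) by ring. rewrite Rabs_mult.
  apply Rmult_le_compat; auto; apply Rabs_pos.
Qed.

Lemma cell_average_close a b h N n (x y : nat -> R) (f pc : nat -> nat -> R) Fb tau :
  0 < h -> (1 <= n)%nat -> (forall j l, Rabs (f j l) <= Fb) ->
  (forall j l, (j < S (S N))%nat -> (l < S (S N))%nat ->
    Rabs (empirical n (fun i => (x i, y i)) (grid_cell a b h N j l) - pc j l) <= tau) ->
  Rabs (rsum (fun i => f (grid_index a h N (x i)) (grid_index b h N (y i))) n -
        INR n * rsum (fun j => rsum (fun l => f j l * pc j l) (S (S N))) (S (S N)))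
  <= INR n * (INR (S (S N)) * INR (S (S N)) * (Fb * tau)).
Proof.
  intros Hh Hn Hf Hq. rewrite sum_by_cells by auto.
  rewrite <- Rmult_minus_distr_l, Rabs_mult, Rabs_right by (apply Rle_ge, pos_INR).
  apply Rmult_le_compat_l. apply pos_INR. apply double_sum_perturb. auto.
Qed.

(** ** The tilted Chernoff estimate on a fixed grid *)

Section TiltedBound.
Context (Omega : Type) (F : set Omega -> Prop) (HF : is_sigma_algebra F)
  (Pr : set Omega -> R) (HPr : is_probability F Pr)
  (PZ : set R -> R) (HPZ : is_probability borel1 PZ) (Z : nat -> Omega -> R)
  (HZmeas : forall i B, borel1 B -> F (fun w => B (Z i w)))
  (HZiid : forall (n : nat) (B : nat -> set R), (forall i, borel1 (B i)) ->
      Pr (fun w => forall i, (i < n)%nat -> B i (Z i w)) = rprod (fun i => PZ (B i)) n)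
  (a b h : R) (N : nat) (Hh : 0 < h).

(** On [E] the tilted sum is
    about [n sum lam pc], while its Chernoff exponent is about
    [n (sum mgf pc - 1)]; hence the exponential rate of [Pr E] is at most
    [sum mgf pc - sum lam pc - 1], up to [(N+2)^2 (e^Lam + Lam) tau]. *)
Lemma tilted_event_bound n (y : nat -> R) (lam pc : nat -> nat -> R) Lam tau (E : set Omega) :
  (1 <= n)%nat -> F E -> (forall j l, Rabs (lam j l) <= Lam) ->
  (forall w, E w -> forall j l, (j < S (S N))%nat -> (l < S (S N))%nat ->
     Rabs (empirical n (fun i => (Z i w, y i)) (grid_cell a b h N j l) - pc j l) <= tau) ->
  Pr E = 0 \/
  ln (Pr E) / INR n <=
    rsum (fun j => rsum (fun l => cell_mgf PZ a h N lam l * pc j l) (S (S N))) (S (S N)) -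
    rsum (fun j => rsum (fun l => lam j l * pc j l) (S (S N))) (S (S N)) - 1 +
    INR (S (S N)) * INR (S (S N)) * (exp Lam + Lam) * tau.
Proof using HF HPr HPZ HZmeas HZiid Hh.
  intros Hn HE Hlam Hclose. set (G := S (S N)). set (GG := INR G * INR G).
  set (A := rsum (fun j => rsum (fun l => lam j l * pc j l) G) G).
  set (B := rsum (fun j => rsum (fun l => cell_mgf PZ a h N lam l * pc j l) G) G).
  destruct (Req_dec (Pr E) 0) as [H0|Hne]; [left; auto|right].
  assert (HPE : 0 < Pr E) by (destruct (prob_nonneg HPr E HE); auto; congruence).
  assert (HnP : 0 < INR n) by (apply lt_0_INR; lia).
  destruct (classic (exists w0, E w0)) as [[w0 Hw0]|Hempty].
  2:{ exfalso. apply Hne. rewrite (measure_ext Pr E (fun _ => False)) by firstorder.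
      apply (prob_empty HF HPr). }
  set (ly := fun i => grid_index b h N (y i)). set (thr := A - Lam * GG * tau).
  assert (Hsub : forall w, E w -> INR n * thr <= rsum (fun i => lam (cell_indices Omega Z a h N w i) (ly i)) n).
  { intros w Hw. assert (H := cell_average_close a b h N n (fun i => Z i w) y lam pc Lam tau Hh Hn Hlam
      (Hclose w Hw)). apply abs_le_bounds in H. unfold thr, GG. fold G A in H. unfold cell_indices, ly. lra. }
  destruct (chernoff_exp Omega F HF Pr HPr PZ HPZ Z HZmeas HZiid a h N Hh n lam ly thr) as [HFt HPt].
  assert (HPE3 : Pr E <= exp (rsum (fun i => cell_mgf PZ a h N lam (ly i) - 1 - thr) n)).
  { eapply Rle_trans; [|apply HPt]. apply (prob_mono HF HPr); auto. }
  (* The second coordinates enter through the cell frequencies at any point of [E]. *)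
  assert (Hmgf : rsum (fun i => cell_mgf PZ a h N lam (ly i)) n <= INR n * (B + GG * (exp Lam * tau))).
  { assert (Hb : forall j l : nat, Rabs (cell_mgf PZ a h N lam l) <= exp Lam).
    { intros j l. destruct (cell_mgf_bounds PZ HPZ a h N Hh lam Lam l Hlam).
      rewrite Rabs_right; lra. }
    assert (H := cell_average_close a b h N n (fun i => Z i w0) y (fun j l => cell_mgf PZ a h N lam l)
      pc (exp Lam) tau Hh Hn Hb (Hclose w0 Hw0)).
    apply abs_le_bounds in H. unfold ly. fold G B GG in H. nra. }
  assert (Hlog := ln_le_of_le_exp _ _ HPE HPE3).
  rewrite !rsum_minus, !rsum_const in Hlog.
  apply (Rmult_le_reg_l (INR n)); auto. unfold Rdiv. rewrite <- Rmult_assoc, Rinv_r_simpl_m by lra.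
  unfold thr in Hlog. fold G GG A B. nra.
Qed.

End TiltedBound.

Lemma lub_approx (S : R -> Prop) D e : is_lub S D -> 0 < e -> exists s, S s /\ D - e < s.
Proof.
  intros [_ HD] He. apply NNPP; intros Hn.
  assert (D <= D - e); [|lra].
  apply HD. intros s Hs. apply Rnot_lt_le; intros Hl; apply Hn; eauto.
Qed.

(** From [D(P || Q) = D]: a finite partition and a bounded tilt [lamk] with
    [sum_k lamk_k P(C_k) > D - delta/4] and [sum_k e^(lamk_k) Q(C_k) <= 1 + delta/8];
    take [lamk_k = ln (P(C_k) / Q(C_k))], or [ln (delta/8)] on [P]-null pieces. *)
Lemma partition_tilt (P Q : set (R * R) -> R) D delta :
  is_probability borel2 P -> is_probability borel2 Q -> divergence_is borel2 P Q D -> 0 < delta ->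
  exists parts (lamk : nat -> R) Lam, is_partition borel2 parts /\ 0 <= Lam /\
    (forall k, (k < length parts)%nat -> Rabs (lamk k) <= Lam) /\
    D - delta / 4 < rsum (fun k => lamk k * P (part_cell parts k)) (length parts) /\
    rsum (fun k => exp (lamk k) * Q (part_cell parts k)) (length parts) <= 1 + delta / 8.
Proof.
  intros HP HQ [HDpos HDlub] Hdelta. assert (HS := borel_sa dist2).
  destruct (lub_approx _ D (delta / 4) HDlub ltac:(lra)) as [s [[parts [Hp ->]] Hdiv]].
  set (K := length parts). set (pk := fun k => P (part_cell parts k)). set (rk := fun k => Q (part_cell parts k)).
  assert (Hpk0 : forall k, 0 <= pk k) by (intros; apply (prob_nonneg HP), (part_cell_meas HS); auto).
  assert (Hrk0 : forall k, 0 <= rk k) by (intros; apply (prob_nonneg HQ), (part_cell_meas HS); auto).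
  set (lamk := fun k => if Req_EM_T (pk k) 0 then ln (delta / 8) else ln (pk k / rk k)).
  exists parts, lamk, (rsum (fun k => Rabs (lamk k)) K). split; [auto|split; [|split; [|split]]].
  - apply rsum_nonneg; intros; apply Rabs_pos.
  - intros k Hk. apply (rsum_term (fun k => Rabs (lamk k))); auto. intros; apply Rabs_pos.
  - rewrite partition_div_rsum in Hdiv. fold K in Hdiv |- *. eapply Rlt_le_trans; [exact Hdiv|].
    right. apply rsum_ext. intros k _. unfold lamk, div_term. fold (pk k) (rk k).
    destruct (Req_EM_T (pk k) 0) as [E|E]; [rewrite E|]; ring.
  - assert (rsum (fun k => exp (lamk k) * rk k) K <= rsum (fun k => pk k + delta / 8 * rk k) K).
    { apply rsum_le. intros k Hk. unfold lamk. destruct (Req_EM_T (pk k) 0) as [E|E].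
      - rewrite exp_ln by lra. rewrite E. assert (H := Hrk0 k). lra.
      - assert (Hp0 : 0 < pk k) by (destruct (Hpk0 k); auto; congruence).
        assert (Hr0 : 0 < rk k) by (apply (HDpos parts Hp); auto; unfold part_cell; apply nth_In; auto).
        rewrite exp_ln by (apply Rdiv_lt_0_compat; auto). field_simplify; [|lra].
        assert (0 <= delta / 8 * rk k) by (apply Rmult_le_pos; auto; lra). lra. }
    rewrite rsum_plus, rsum_scal in H.
    assert (E1 := partition_total HS P parts HP Hp). assert (E2 := partition_total HS Q parts HQ Hp).
    fold K in E1, E2 |- *. unfold pk, rk in H. cbv beta in H. rewrite E1, E2 in H. lra.
Qed.

Lemma mgf_cells_product (PXY PZPY : set (R * R) -> R) (PZ PY : set R -> R) lam a b h N :
  is_probability borel2 PXY -> 0 < h ->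
  (forall B, PY B = PXY (fun p => B (snd p))) ->
  (forall A B, borel1 A -> borel1 B -> PZPY (fun p => A (fst p) /\ B (snd p)) = PZ A * PY B) ->
  rsum (fun j => rsum (fun l => cell_mgf PZ a h N lam l * PXY (grid_cell a b h N j l)) (S (S N))) (S (S N)) =
  rsum (fun j => rsum (fun l => exp (lam j l) * PZPY (grid_cell a b h N j l)) (S (S N))) (S (S N)).
Proof.
  intros HPXY Hh HPY HPZPYrect. set (G := S (S N)).
  assert (EY : forall l, rsum (fun j => PXY (grid_cell a b h N j l)) G = PY (grid_int b h N l)).
  { intros l. rewrite HPY.
    rewrite (prob_partition_sum (borel_sa dist2) HPXY (fun j p => grid_int a h N j (fst p)) G).
    - apply rsum_ext; intros; unfold grid_cell; apply measure_ext; tauto.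
    - intros; apply borel2_fst, grid_int_borel.
    - intros; apply grid_int_cover; auto.
    - intros x i j _ _; apply grid_int_unique; auto.
    - apply borel2_snd, grid_int_borel. }
  rewrite rsum_swap, (rsum_swap (fun j l => exp (lam j l) * PZPY (grid_cell a b h N j l))).
  apply rsum_ext. intros l _. rewrite rsum_scal, EY.
  unfold cell_mgf. rewrite Rmult_comm, <- rsum_scal. apply rsum_ext; intros j _.
  unfold grid_cell. rewrite HPZPYrect by apply grid_int_borel. fold G. ring.
Qed.

Lemma relabel_tilt_gap (P Q : set (R * R) -> R) parts (lamk : nat -> R) Lam a b h N kap :
  is_probability borel2 P -> is_probability borel2 Q -> is_partition borel2 parts -> 0 < h ->
  (forall j l, (kap j l < length parts)%nat) -> (forall k, (k < length parts)%nat -> Rabs (lamk k) <= Lam) ->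
  rsum (fun j => rsum (fun l => exp (lamk (kap j l)) * Q (grid_cell a b h N j l)) (S (S N))) (S (S N)) -
  rsum (fun j => rsum (fun l => lamk (kap j l) * P (grid_cell a b h N j l)) (S (S N))) (S (S N))
  <= rsum (fun k => exp (lamk k) * Q (part_cell parts k)) (length parts) -
     rsum (fun k => lamk k * P (part_cell parts k)) (length parts) +
     2 * exp Lam * Q (mislabeled parts a b h N kap) + 2 * Lam * P (mislabeled parts a b h N kap).
Proof.
  intros HP HQ Hp Hh Hkap HLam.
  assert (HrA := abs_le_bounds _ _ (relabel_error P parts a b h N kap lamk Lam HP Hp Hh Hkap HLam)).
  assert (Hexp : forall k, (k < length parts)%nat -> Rabs (exp (lamk k)) <= exp Lam).
  { intros k Hk. rewrite Rabs_right by (apply Rle_ge, Rlt_le, exp_pos). apply exp_le_of_abs; auto. }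
  assert (HrB := abs_le_bounds _ _
    (relabel_error Q parts a b h N kap (fun k => exp (lamk k)) (exp Lam) HQ Hp Hh Hkap Hexp)).
  lra.
Qed.

(** The typical event is measurable: it is open in the samples, since moving
    them by less than [r] changes the Prokhorov distance by at most [r]. *)
Lemma typical_event_measurable (Omega : Type) (F : set Omega -> Prop) (Pr : set Omega -> R)
  (PZ : set R -> R) (Z : nat -> Omega -> R) (PXY : set (R * R) -> R) eps n (y : nat -> R) :
  is_sigma_algebra F -> is_probability F Pr -> is_probability borel2 PXY ->
  (forall i B, borel1 B -> F (fun w => B (Z i w))) ->
  (forall (n : nat) (B : nat -> set R), (forall i, borel1 (B i)) ->
      Pr (fun w => forall i, (i < n)%nat -> B i (Z i w)) = rprod (fun i => PZ (B i)) n) ->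
  F (fun w => typical_XY PXY eps n (fun i => Z i w) y).
Proof.
  intros HF HPr HPXY HZmeas HZiid.
  apply (open_event_measurable Omega F HF Pr HPr PZ Z HZmeas HZiid n
    (fun z => prokhorov_lt dist2 (empirical n (fun i => (z i, y i))) PXY eps)).
  intros z Hz. apply prokhorov_lt_iff in Hz. destruct Hz as [e [He Hok]].
  exists ((eps - e) / 2). split. lra. intros z' Hz'.
  apply prokhorov_lt_iff. exists (e + (eps - e) / 2). split. lra.
  apply (prokhorov_ok_shift PXY n (fun i => (z i, y i))); auto. lra.
  intros i Hi. rewrite dist2_same_snd, Rabs_minus_sym. auto.
Qed.

Lemma error_budget delta Lam GG BP BQ s eps :
  0 < delta -> 0 <= Lam -> 0 < GG -> 0 <= BP -> 0 <= BQ -> 0 <= s -> 0 < eps ->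
  BP + BQ < delta / (8 * (exp Lam + Lam + 1)) ->
  GG * s <= delta / (16 * (exp Lam + Lam + 1)) ->
  eps < delta / (16 * (exp Lam + Lam + 1) * GG) ->
  2 * exp Lam * BQ + 2 * Lam * BP + GG * (exp Lam + Lam) * (s + eps) <= 3 * delta / 8.
Proof.
  intros Hd HL HGG HBP HBQ Hs He HB HS HE. set (c := exp Lam + Lam).
  assert (Hc : 0 < c) by (unfold c; assert (H := exp_pos Lam); lra). fold c in HB, HS, HE.
  assert (Hratio : c / (c + 1) <= 1) by (apply (Rmult_le_reg_r (c + 1)); [lra|]; field_simplify; lra).
  assert (H1 : 2 * exp Lam * BQ + 2 * Lam * BP <= 2 * c * (BP + BQ))
    by (unfold c; assert (H := exp_pos Lam); nra).
  assert (H2 : 2 * c * (BP + BQ) <= delta / 4 * (c / (c + 1))).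
  { replace (delta / 4 * (c / (c + 1))) with (2 * c * (delta / (8 * (c + 1)))) by (field; lra). nra. }
  assert (H3 : GG * c * s <= delta / 16 * (c / (c + 1))).
  { replace (delta / 16 * (c / (c + 1))) with (c * (delta / (16 * (c + 1)))) by (field; lra). nra. }
  assert (H4 : GG * c * eps <= delta / 16 * (c / (c + 1))).
  { replace (delta / 16 * (c / (c + 1))) with (c * GG * (delta / (16 * (c + 1) * GG))) by (field; lra).
    assert (0 < c * GG) by nra. nra. }
  replace (GG * c * (s + eps)) with (GG * c * s + GG * c * eps) by ring. nra.
Qed.

Theorem mainTheorem6
  (PXY : set (R * R) -> R) (PZ : set R -> R)
  (HPXY : is_probability borel2 PXY) (HPZ : is_probability borel1 PZ)
  (* P_Y: the second marginal of P_XY *)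
  (PY : set R -> R) (HPY : forall B, PY B = PXY (fun p => B (snd p)))
  (* P_Z P_Y: the product probability measure on R^2 *)
  (PZPY : set (R * R) -> R) (HPZPY : is_probability borel2 PZPY)
  (HPZPYrect : forall A B, borel1 A -> borel1 B ->
      PZPY (fun p => A (fst p) /\ B (snd p)) = PZ A * PY B)
  (* D(P_XY || P_Z P_Y) = D < infinity *)
  (D : R) (HD : divergence_is borel2 PXY PZPY D)
  (* Z_1, Z_2, ... i.i.d. P_Z on a probability space (Omega, F, Pr) *)
  (Omega : Type) (F : set Omega -> Prop) (HF : is_sigma_algebra F)
  (Pr : set Omega -> R) (HPr : is_probability F Pr)
  (Z : nat -> Omega -> R)
  (HZmeas : forall i B, borel1 B -> F (fun w => B (Z i w)))
  (HZiid : forall (n : nat) (B : nat -> set R), (forall i, borel1 (B i)) ->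
      Pr (fun w => forall i, (i < n)%nat -> B i (Z i w)) = rprod (fun i => PZ (B i)) n) :
  forall delta, 0 < delta ->
  exists eps0, 0 < eps0 /\
  forall eps, 0 < eps -> eps < eps0 ->
  forall y : nat -> nat -> R,
    (forall n, (1 <= n)%nat -> typical_Y PY eps n (y n)) ->
    log_rate_limsup_le
      (fun n => Pr (fun w => typical_XY PXY eps n (fun i => Z i w) (y n)))
      (- D + delta).
Proof.
  intros delta Hdelta.
  destruct (partition_tilt PXY PZPY D delta HPXY HPZPY HD Hdelta)
    as [parts [lamk [Lam [Hp [HLam0 [HLam [HA HB]]]]]]].
  set (c := exp Lam + Lam + 1). assert (Hc : 0 < c) by (unfold c; assert (H := exp_pos Lam); lra).
  destruct (grid_labeling PXY PZPY parts HPXY HPZPY Hp (delta / (8 * c)) (delta / (16 * c)))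
    as [a [b [h [N [kap [w [Hh [Hw [Hkap [HBad Hstrip]]]]]]]]]]; try (apply Rdiv_lt_0_compat; lra).
  set (GG := INR (S (S N)) * INR (S (S N))) in Hstrip.
  assert (HGG : 0 < GG) by (unfold GG; apply Rmult_lt_0_compat; apply lt_0_INR; lia).
  exists (Rmin w (delta / (16 * c * GG))). split; [apply Rmin_glb_lt; auto; apply Rdiv_lt_0_compat; nra|].
  intros eps Heps Heps0 y _ eta Heta. exists 1%nat. intros n _ Hn.
  assert (Hew : eps <= w) by (eapply Rlt_le, Rlt_le_trans; [exact Heps0 | apply Rmin_l]).
  destruct (tilted_event_bound Omega F HF Pr HPr PZ HPZ Z HZmeas HZiid a b h N Hh n (y n)
    (fun j l => lamk (kap j l)) (fun j l => PXY (grid_cell a b h N j l)) Lam (PXY (grid_strip a b h N w) + eps)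
    _ Hn (typical_event_measurable Omega F Pr PZ Z PXY eps n (y n) HF HPr HPXY HZmeas HZiid)
    (fun j l => HLam _ (Hkap j l))
    (fun w' Hw' j l _ _ => cell_frequency_close PXY n _ a b h N j l eps w HPXY Hh Hn Hew Hw'))
    as [H0|Hrate]; [left; exact H0 | right].
  rewrite (mgf_cells_product PXY PZPY PZ PY) in Hrate by auto.
  assert (Hgap := relabel_tilt_gap PXY PZPY parts lamk Lam a b h N kap HPXY HPZPY Hp Hh Hkap HLam).
  assert (Hbud := error_budget delta Lam GG (PXY (mislabeled parts a b h N kap))
    (PZPY (mislabeled parts a b h N kap)) (PXY (grid_strip a b h N w)) eps Hdelta HLam0 HGG
    ltac:(apply (prob_nonneg HPXY), mislabeled_borel; auto)
    ltac:(apply (prob_nonneg HPZPY), mislabeled_borel; auto)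
    ltac:(apply (prob_nonneg HPXY), grid_strip_borel) Heps HBad Hstrip
    ltac:(eapply Rlt_le_trans; [exact Heps0 | apply Rmin_r])).
  fold GG in Hrate. lra.
Qed.
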